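(* In the setting described in the context, suppose there exists $(z_1,\dots,z_m)\in\boldsymbol{\mathcal H}$ with $-\big(\nabla_1\boldsymbol g_1(z_1,\dots,z_m),\dots,\nabla_m\boldsymbol g_m(z_1,\dots,z_m)\big)\in\partial\boldsymbol f(z_1,\dots,z_m)$, and there exists $\chi\in]0,+\infty[$ such that for all $(x_i),(y_i)\in\boldsymbol{\mathcal H}$, $$\sum_{i=1}^m\langle\nabla_i\boldsymbol g_i(x_1,\dots,x_m)-\nabla_i\boldsymbol g_i(y_1,\dots,y_m),x_i-y_i\rangle\ge\frac1\chi\sum_{i=1}^m\|\nabla_i\boldsymbol g_i(x_1,\dots,x_m)-\nabla_i\boldsymbol g_i(y_1,\dots,y_m)\|^2.$$ Let $\varepsilon\in]0,2/(\chi+1)[$ and let $(\gamma_n)_{n\in\mathbb N}$ be a sequence in $[\varepsilon,(2-\varepsilon)/\chi]$. For every $i$, let $x_{i,0}\in\mathcal H_i$ and let $(a_{i,n})_n,(b_{i,n})_n$ be absolutely summable sequences in $\mathcal H_i$. For every $n$ define $y_{i,n}=x_{i,n}-\gamma_n(\nabla_i\boldsymbol g_i(x_{1,n},\dots,x_{m,n})+a_{i,n})$ for $i=1,\dots,m$, and $(x_{1,n+1},\dots,x_{m,n+1})=\operatorname{prox}_{\gamma_n\boldsymbol f}(y_{1,n},\dots,y_{m,n})+(b_{1,n},\dots,b_{m,n})$. Then there exists a solution $(\overline x_1,\dots,\overline x_m)$ to Problem (P) such that for every $i$, $x_{i,n}\rightharpoonup\overline x_i$ and $\nabla_i\boldsymbol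 g_i(x_{1,n},\dots,x_{m,n})\to\nabla_i\boldsymbol g_i(\overline x_1,\dots,\overline x_m)$ strongly.
   Context: Let $m\ge2$ be an integer and let $\mathcal H_1,\dots,\mathcal H_m$ be real Hilbert spaces. Let $\boldsymbol{\mathcal H}=\mathcal H_1\oplus\cdots\oplus\mathcal H_m$ with inner product $\sum_i\langle x_i,y_i\rangle$. $\Gamma_0(\mathcal K)$ denotes the proper lower semicontinuous convex functions $\mathcal K\to\left]-\infty,+\infty\right]$. Let $\boldsymbol f\in\Gamma_0(\boldsymbol{\mathcal H})$ with subdifferential $\partial\boldsymbol f$. For each $i$, $\boldsymbol g_i:\boldsymbol{\mathcal H}\to\left]-\infty,+\infty\right]$ is such that for every $(x_1,\dots,x_m)$, $x\mapsto\boldsymbol g_i(x_1,\dots,x_{i-1},x,x_{i+1},\dots,x_m)$ is convex and differentiable on $\mathcal H_i$, with gradient $\nabla_i\boldsymbol g_i(x_1,\dots,x_m)$ at $x_i$; and $\sum_i\langle\nabla_i\boldsymbol g_i(\boldsymbol x)-\nabla_i\boldsymbol g_i(\boldsymbol y),x_i-y_i\rangle\ge0$ for all $\boldsymbol x,\boldsymbol y\in\boldsymbol{\mathcal H}$. Problem (P): find $x_1\in\mathcal H_1,\dots,x_m\in\mathcal H_m$ such that for each $i$, $x_i\in\operatorname{Argmin}_{x\in\mathcal H_i}\big(\boldsymbol f(x_1,\dots,x_{i-1},x,x_{i+1},\dots,x_m)+\boldsymbol g_i(x_1,\dots,x_{i-1},x,x_{i+1},\dots,x_m)\big)$. For $\varphi\in\Gamma_0(\mathcal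 K)$, $\operatorname{prox}_\varphi x=\operatorname{argmin}_{y}\big(\varphi(y)+\tfrac12\|x-y\|^2\big)$. $\rightharpoonup$ denotes weak convergence, $\to$ strong convergence. *)

(* Stdlib reals (R) for all analysis; mathcomp's ordinal type 'I_m
   (boot/fintype) only as the finite index set {1,...,m} (0-based here). *)
From mathcomp Require Import ssreflect ssrfun ssrbool eqtype ssrnat seq fintype.
From Stdlib Require Import Reals.
Open Scope R_scope.


Record Hilbert := mkHilbert {
  hcar :> Type;
  hzero : hcar;
  hadd : hcar -> hcar -> hcar;
  hopp : hcar -> hcar;
  hscal : R -> hcar -> hcar;
  hinner : hcar -> hcar -> R;
  hadd_assoc : forall x y z, hadd x (hadd y z) = hadd (hadd x y) z;
  hadd_comm : forall x y, hadd x y = hadd y x;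
  hadd_zero : forall x, hadd x hzero = x;
  hadd_opp : forall x, hadd x (hopp x) = hzero;
  hscal_one : forall x, hscal 1 x = x;
  hscal_assoc : forall a b x, hscal a (hscal b x) = hscal (a * b) x;
  hscal_distr_l : forall a x y, hscal a (hadd x y) = hadd (hscal a x) (hscal a y);
  hscal_distr_r : forall a b x, hscal (a + b) x = hadd (hscal a x) (hscal b x);
  hinner_sym : forall x y, hinner x y = hinner y x;
  hinner_add : forall x y z, hinner (hadd x y) z = hinner x z + hinner y z;
  hinner_scal : forall a x y, hinner (hscal a x) y = a * hinner x y;
  hinner_pos : forall x, 0 <= hinner x x;
  hinner_def : forall x, hinner x x = 0 -> x = hzero;
  hcomplete : forall u : nat -> hcar,
    (forall eps, 0 < eps -> exists N, forall p q, le N p -> le N q ->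
        sqrt (hinner (hadd (u p) (hopp (u q))) (hadd (u p) (hopp (u q)))) < eps) ->
    exists l, forall eps, 0 < eps -> exists N, forall n, le N n ->
        sqrt (hinner (hadd (u n) (hopp l)) (hadd (u n) (hopp l))) < eps
}.

Arguments hzero {h}.
Arguments hadd {h} _ _.
Arguments hopp {h} _.
Arguments hscal {h} _ _.
Arguments hinner {h} _ _.

Definition hsub {K : Hilbert} (x y : K) : K := hadd x (hopp y).
Definition hnorm {K : Hilbert} (x : K) : R := sqrt (hinner x x).

Definition strong_cv {K : Hilbert} (u : nat -> K) (l : K) : Prop :=
  Un_cv (fun n => hnorm (hsub (u n) l)) 0.
Definition weak_cv {K : Hilbert} (u : nat -> K) (l : K) : Prop :=
  forall y : K, Un_cv (fun n => hinner (u n) y) (hinner l y).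

Definition abs_summable {K : Hilbert} (a : nat -> K) : Prop :=
  exists S, Un_cv (fun N => sum_f_R0 (fun n => hnorm (a n)) N) S.

Inductive eR := Fin (r : R) | Pinf.

Definition Rext_le (a b : eR) : Prop :=
  match a, b with
  | _, Pinf => True
  | Pinf, Fin _ => False
  | Fin x, Fin y => x <= y
  end.
Definition Rext_lt (a b : eR) : Prop :=
  match a, b with
  | Fin x, Fin y => x < y
  | Fin _, Pinf => True
  | Pinf, _ => False
  end.
Definition Rext_add (a b : eR) : eR :=
  match a, b with
  | Fin x, Fin y => Fin (x + y)
  | _, _ => Pinf
  end.
(* scaling by a (strictly positive) real: t * (+oo) = +oo *)
Definition Rext_scal (t : R) (a : eR) : eR :=
  match a with Fin x => Fin (t * x) | Pinf => Pinf end.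

Definition proper_fun {V : Type} (f : V -> eR) : Prop :=
  exists x, f x <> Pinf.
Definition convex_fun {V : Type} (add : V -> V -> V) (scal : R -> V -> V)
    (f : V -> eR) : Prop :=
  forall x y t, 0 < t < 1 ->
    Rext_le (f (add (scal t x) (scal (1 - t) y)))
            (Rext_add (Rext_scal t (f x)) (Rext_scal (1 - t) (f y))).
Definition lsc_fun {V : Type} (dist : V -> V -> R) (f : V -> eR) : Prop :=
  forall x r, Rext_lt (Fin r) (f x) ->
    exists d, 0 < d /\ forall y, dist y x < d -> Rext_lt (Fin r) (f y).

Definition has_gradient {K : Hilbert} (phi : K -> eR) (x u : K) : Prop :=
  exists px, phi x = Fin px /\
  forall eps, 0 < eps -> exists d, 0 < d /\
    forall h : K, hnorm h < d ->
      exists ph, phi (hadd x h) = Fin ph /\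
        Rabs (ph - px - hinner u h) <= eps * hnorm h.


Section Product.
Variables (m : nat) (H : 'I_m -> Hilbert).

Definition Prod : Type := forall i : 'I_m, hcar (H i).

Definition sumI (F : 'I_m -> R) : R := foldr Rplus 0 (map F (enum 'I_m)).

Definition padd (x y : Prod) : Prod := fun i => hadd (x i) (y i).
Definition pscal (t : R) (x : Prod) : Prod := fun i => hscal t (x i).
Definition psub (x y : Prod) : Prod := fun i => hsub (x i) (y i).
Definition pinner (x y : Prod) : R := sumI (fun i => hinner (x i) (y i)).
Definition pnorm (x : Prod) : R := sqrt (pinner x x).

Definition Gamma0_prod (f : Prod -> eR) : Prop :=
  proper_fun f /\ lsc_fun (fun x y => pnorm (psub x y)) f /\ convex_fun padd pscal f.

Definition subdiff_prod (f : Prod -> eR) (x u : Prod) : Prop :=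
  exists fx, f x = Fin fx /\
    forall y, Rext_le (Fin (fx + pinner (psub y x) u)) (f y).

Definition is_prox_prod (gam : R) (f : Prod -> eR) (y p : Prod) : Prop :=
  forall q,
    Rext_le (Rext_add (Rext_scal gam (f p)) (Fin (/2 * pnorm (psub y p) ^ 2)))
            (Rext_add (Rext_scal gam (f q)) (Fin (/2 * pnorm (psub y q) ^ 2))).

(* (x_1,...,x_{i-1}, v, x_{i+1},...,x_m) *)
Definition upd (x : Prod) (i : 'I_m) (v : H i) : Prod :=
  fun j => match @eqP _ i j with
           | ReflectT e => eq_rect i (fun k => hcar (H k)) v j e
           | ReflectF _ => x j
           end.

Definition solves_P (f : Prod -> eR) (g : 'I_m -> Prod -> eR) (x : Prod) : Prop :=
  forall i (v : H i),
    Rext_le (Rext_add (f (upd x i (x i))) (g i (upd x i (x i))))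
            (Rext_add (f (upd x i v)) (g i (upd x i v))).

End Product.

Arguments sumI {m} F.
Arguments Prod {m} H.
Arguments padd {m H} x y.
Arguments pscal {m H} t x.
Arguments psub {m H} x y.
Arguments pinner {m H} x y.
Arguments pnorm {m H} x.
Arguments Gamma0_prod {m H} f.
Arguments subdiff_prod {m H} f x u.
Arguments is_prox_prod {m H} gam f y p.
Arguments upd {m H} x i v.
Arguments solves_P {m H} f g x.

(* With B x := (grad_1 g_1(x), ..., grad_m g_m(x)), the iteration is the
   forward-backward method x_{n+1} = prox_{gam_n f}(x_n - gam_n (B x_n + a_n)) + b_n
   for the inclusion 0 \in df(x) + B x in the direct sum H_1 + ... + H_m, on
   which B is (1/chi)-cocoercive. *)

From mathcomp Require Import ssreflect ssrfun ssrbool eqtype ssrnat seq fintype.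
From Stdlib Require Import Reals.
From Stdlib Require Import Lra Psatz ZArith Lia ClassicalEpsilon Classical FunctionalExtensionality.
Open Scope R_scope.

Arguments hadd_assoc {h} x y z.
Arguments hadd_comm {h} x y.
Arguments hadd_zero {h} x.
Arguments hadd_opp {h} x.
Arguments hinner_sym {h} x y.
Arguments hinner_add {h} x y z.
Arguments hinner_scal {h} a x y.
Arguments hinner_pos {h} x.
Arguments hinner_def {h} x.
Arguments hcomplete {h} u.

Section InnerProductGeometry.
Context {K : Hilbert}.
Implicit Types x y z : K.

Lemma inner_addr x y z : hinner x (hadd y z) = hinner x y + hinner x z.
Proof. by rewrite hinner_sym hinner_add (hinner_sym y) (hinner_sym z). Qed.

Lemma inner_scalr a x y : hinner x (hscal a y) = a * hinner x y.
Proof. by rewrite hinner_sym hinner_scal hinner_sym. Qed.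

Lemma inner0l y : hinner (@hzero K) y = 0.
Proof. have E := hinner_add (@hzero K) hzero y. rewrite hadd_zero in E. lra. Qed.

Lemma inner0r y : hinner y (@hzero K) = 0.
Proof. by rewrite hinner_sym inner0l. Qed.

Lemma inner_oppl x y : hinner (hopp x) y = - hinner x y.
Proof. have E := hinner_add x (hopp x) y. rewrite hadd_opp inner0l in E. lra. Qed.

Lemma inner_oppr x y : hinner x (hopp y) = - hinner x y.
Proof. by rewrite hinner_sym inner_oppl hinner_sym. Qed.

Lemma inner_subl x y z : hinner (hsub x y) z = hinner x z - hinner y z.
Proof. rewrite /hsub hinner_add inner_oppl. ring. Qed.

Lemma inner_subr x y z : hinner z (hsub x y) = hinner z x - hinner z y.
Proof. rewrite /hsub inner_addr inner_oppr. ring. Qed.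

(* Vectors are determined by their inner products: this turns every vector
   identity into a computation with real numbers. *)
Lemma vec_ext x y : (forall z, hinner x z = hinner y z) -> x = y.
Proof.
  move=> Hxy; have E0 : hinner (hsub x y) (hsub x y) = 0 by rewrite inner_subl !Hxy; ring.
  have -> : x = hadd (hsub x y) y.
  { by rewrite /hsub -hadd_assoc (hadd_comm (hopp y)) hadd_opp hadd_zero. }
  by rewrite (hinner_def _ E0) hadd_comm hadd_zero.
Qed.

Lemma eq_of_sub_norm0 x y : hinner (hsub x y) (hsub x y) = 0 -> x = y.
Proof.
  move=> E; apply: vec_ext => z.
  have Ez : hsub x y = hzero := hinner_def _ E.
  have := inner_subl x y z; rewrite Ez inner0l; lra.
Qed.

Lemma hnorm_ge0 x : 0 <= hnorm x.
Proof. exact: sqrt_pos. Qed.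

Lemma hnorm_mul x : hnorm x * hnorm x = hinner x x.
Proof. exact: (sqrt_sqrt _ (hinner_pos x)). Qed.

Lemma hnorm_pow2 x : hnorm x ^ 2 = hinner x x.
Proof. by rewrite /= Rmult_1_r hnorm_mul. Qed.

End InnerProductGeometry.

Ltac inner_expand := repeat progress rewrite ?hinner_add ?inner_addr ?hinner_scal
   ?inner_scalr ?inner_oppl ?inner_oppr ?inner_subl ?inner_subr ?inner0l ?inner0r.

Lemma le_of_sq_le a b : 0 <= a -> 0 <= b -> a * a <= b * b -> a <= b.
Proof. move=> *; nra. Qed.

Lemma lt_of_sq_lt a b : 0 <= a -> 0 <= b -> a * a < b * b -> a < b.
Proof. move=> *; nra. Qed.

Section Norms.
Context {K : Hilbert}.
Implicit Types x y z : K.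

Lemma cauchy_schwarz_sq x y : hinner x y * hinner x y <= hinner x x * hinner y y.
Proof.
  have Hy := hinner_pos y.
  case: (Req_dec (hinner y y) 0) => [E|E].
  - by rewrite (hinner_def _ E) !inner0r; nra.
  - set t := - hinner x y / hinner y y.
    have P := hinner_pos (hadd x (hscal t y)).
    rewrite hinner_add !inner_addr !hinner_scal !inner_scalr (hinner_sym y x) in P.
    have Ht : t * hinner y y = - hinner x y by rewrite /t; field.
    nra.
Qed.

Lemma cauchy_schwarz x y : Rabs (hinner x y) <= hnorm x * hnorm y.
Proof.
  apply: le_of_sq_le; first exact: Rabs_pos.
  - by apply: Rmult_le_pos; apply: hnorm_ge0.
  rewrite -Rabs_mult Rabs_right; last by apply: Rle_ge; nra.
  have -> : hnorm x * hnorm y * (hnorm x * hnorm y) = (hnorm x * hnorm x) * (hnorm y * hnorm y)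
    by ring.
  rewrite !hnorm_mul; exact: cauchy_schwarz_sq.
Qed.

Lemma inner_le_norms x y : hinner x y <= hnorm x * hnorm y.
Proof. have := cauchy_schwarz x y; have := Rle_abs (hinner x y); lra. Qed.

Lemma inner_ge_neg_norms x y : - (hnorm x * hnorm y) <= hinner x y.
Proof.
  have := cauchy_schwarz x y; have := Rle_abs (- hinner x y); rewrite Rabs_Ropp; lra.
Qed.

Lemma hnorm_add_le x y : hnorm (hadd x y) <= hnorm x + hnorm y.
Proof.
  apply: le_of_sq_le; first exact: hnorm_ge0.
  - by have := hnorm_ge0 x; have := hnorm_ge0 y; lra.
  rewrite hnorm_mul hinner_add !inner_addr (hinner_sym y x).
  have := inner_le_norms x y; have := hnorm_mul x; have := hnorm_mul y; nra.
Qed.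

Lemma hnorm_scal a x : hnorm (hscal a x) = Rabs a * hnorm x.
Proof.
  rewrite /hnorm hinner_scal inner_scalr -Rmult_assoc sqrt_mult; last exact: hinner_pos.
  - by rewrite -sqrt_Rsqr_abs.
  - nra.
Qed.

Lemma hnorm_opp x : hnorm (hopp x) = hnorm x.
Proof. by rewrite /hnorm inner_oppl inner_oppr Ropp_involutive. Qed.

Lemma hnorm_sub_sym x y : hnorm (hsub x y) = hnorm (hsub y x).
Proof. rewrite /hnorm; f_equal; inner_expand; rewrite (hinner_sym x y); ring. Qed.

Lemma hnorm_sub_triangle x y z : hnorm (hsub x z) <= hnorm (hsub x y) + hnorm (hsub y z).
Proof.
  have -> : hsub x z = hadd (hsub x y) (hsub y z) by apply: vec_ext => w; inner_expand; ring.
  exact: hnorm_add_le.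
Qed.

Lemma hnorm_sub_le x y : hnorm (hsub x y) <= hnorm x + hnorm y.
Proof. rewrite /hsub -(hnorm_opp y); exact: hnorm_add_le. Qed.

Lemma hnorm_add_pow2 x y : hnorm (hadd x y) ^ 2 = hnorm x ^ 2 + 2 * hinner x y + hnorm y ^ 2.
Proof. rewrite !hnorm_pow2; inner_expand; rewrite (hinner_sym y x); ring. Qed.

Lemma hnorm_sub_pow2 x y : hnorm (hsub x y) ^ 2 = hnorm x ^ 2 - 2 * hinner x y + hnorm y ^ 2.
Proof. rewrite !hnorm_pow2; inner_expand; rewrite (hinner_sym y x); ring. Qed.

Lemma hnorm_sub_scal_pow2 x y t :
  hnorm (hsub x (hscal t y)) ^ 2 = hnorm x ^ 2 - 2 * t * hinner y x + t * t * hnorm y ^ 2.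
Proof. rewrite !hnorm_pow2; inner_expand; rewrite (hinner_sym x y); ring. Qed.

Lemma hsub0 x : hsub x hzero = x.
Proof. by apply: vec_ext => w; inner_expand; ring. Qed.

Lemma hnorm_le_sub x y : hnorm x <= hnorm (hsub x y) + hnorm y.
Proof. by have := hnorm_sub_triangle x y hzero; rewrite !hsub0. Qed.

End Norms.

(* Dependent version of the axiom of choice (ClassicalEpsilon.choice is the
   non-dependent one); needed to pick limits componentwise in a product. *)
Lemma dep_choice {A : Type} {B : A -> Type} (P : forall a, B a -> Prop) :
  (forall a, exists b, P a b) -> exists g : (forall a, B a), forall a, P a (g a).
Proof.
  move=> H; exists (fun a => proj1_sig (constructive_indefinite_description _ (H a))).
  move=> a; exact: (proj2_sig (constructive_indefinite_description _ (H a))).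
Qed.

(* A real X which is at most t * N for all small t > 0 is nonpositive; this is
   how first-order optimality conditions are extracted from convex combinations. *)
Lemma nonpos_of_small_multiples X N :
  0 <= N -> (forall t, 0 < t < 1 -> X <= t * N) -> X <= 0.
Proof.
  move=> HN H; apply: Rnot_lt_le => HX.
  set t := Rmin (/2) (X / (N + 1)).
  have Ht0 : 0 < t by apply: Rmin_pos; [lra | apply: Rdiv_lt_0_compat; lra].
  have Ht1 : t <= /2 := Rmin_l _ _.
  have HtX : t * (N + 1) <= X.
  { have := Rmult_le_compat_r (N + 1) _ _ (ltac:(lra)) (Rmin_r (/2) (X / (N + 1))).
    by have -> : X / (N + 1) * (N + 1) = X by field; lra. }
  have := H t (ltac:(lra)); nra.
Qed.

Definition ultimately (Q : nat -> Prop) : Prop :=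
  exists N, forall n, (N <= n)%coq_nat -> Q n.

Lemma ultimately_and (Q1 Q2 : nat -> Prop) :
  ultimately Q1 -> ultimately Q2 -> ultimately (fun n => Q1 n /\ Q2 n).
Proof. move=> [N1 H1] [N2 H2]; exists (max N1 N2) => n Hn; split; [apply: H1 | apply: H2]; lia. Qed.

Lemma ultimately_impl (Q1 Q2 : nat -> Prop) :
  (forall n, Q1 n -> Q2 n) -> ultimately Q1 -> ultimately Q2.
Proof. by move=> H [N HN]; exists N => n /HN /H. Qed.

Lemma Un_cv_ultimately u l :
  Un_cv u l <-> forall eps, 0 < eps -> ultimately (fun n => Rabs (u n - l) < eps).
Proof. by []. Qed.

Lemma null_ultimately u :
  Un_cv u 0 -> forall eps, 0 < eps -> ultimately (fun n => Rabs (u n) < eps).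
Proof.
  move=> /Un_cv_ultimately H eps /H; apply: ultimately_impl => n; by rewrite Rminus_0_r.
Qed.

Lemma null_of_ultimately u :
  (forall eps, 0 < eps -> ultimately (fun n => Rabs (u n) < eps)) -> Un_cv u 0.
Proof.
  move=> H; apply/Un_cv_ultimately => eps /H; apply: ultimately_impl => n.
  by rewrite Rminus_0_r.
Qed.

Lemma cv_const c : Un_cv (fun _ : nat => c) c.
Proof. move=> e He; exists O => n _; by rewrite /Rdist Rminus_diag Rabs_R0. Qed.

Lemma cv_scal c u l : Un_cv u l -> Un_cv (fun n => c * u n) (c * l).
Proof. exact: CV_mult (cv_const c). Qed.

Lemma cv_shift u l : Un_cv u l -> Un_cv (fun n => u (S n)) l.
Proof. move=> H eps /H [N HN]; exists N => n Hn; apply: HN; lia. Qed.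

Lemma null_plus u v : Un_cv u 0 -> Un_cv v 0 -> Un_cv (fun n => u n + v n) 0.
Proof. by move=> Hu Hv; have := CV_plus _ _ _ _ Hu Hv; rewrite Rplus_0_r. Qed.

Lemma null_scal c u : Un_cv u 0 -> Un_cv (fun n => c * u n) 0.
Proof. by move=> Hu; have := cv_scal c _ _ Hu; rewrite Rmult_0_r. Qed.

Lemma null_squeeze (t w : nat -> R) :
  (forall n, Rabs (t n) <= w n) -> Un_cv w 0 -> Un_cv t 0.
Proof.
  move=> H Hw; apply: null_of_ultimately => eps /(null_ultimately _ Hw).
  apply: ultimately_impl => n h; have := H n; have := Rle_abs (w n); lra.
Qed.

Lemma null_mul_bounded (v u : nat -> R) M :
  (forall n, Rabs (v n) <= M) -> Un_cv u 0 -> Un_cv (fun n => v n * u n) 0.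
Proof.
  move=> Hv Hu; apply: (null_squeeze _ (fun n => M * Rabs (u n))).
  - move=> n; rewrite Rabs_mult; apply: Rmult_le_compat_r; [exact: Rabs_pos | exact: Hv].
  - by apply: null_scal; have := cv_cvabs _ _ Hu; rewrite Rabs_R0.
Qed.

Lemma null_of_sq_le (t w : nat -> R) k :
  0 < k -> (forall n, 0 <= t n) -> (forall n, k * t n ^ 2 <= w n) ->
  Un_cv w 0 -> Un_cv t 0.
Proof.
  move=> Hk Ht Hw H; apply: null_of_ultimately => eps He.
  have Hke : 0 < k * (eps * eps) by apply: Rmult_lt_0_compat; nra.
  apply: ultimately_impl (null_ultimately _ H _ Hke) => n h.
  rewrite Rabs_right; last exact/Rle_ge/Ht.
  have := Hw n; have := Rle_abs (w n); have := Ht n; rewrite /= Rmult_1_r => *.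
  apply: lt_of_sq_lt; nra.
Qed.

Lemma cv_bounded u l : Un_cv u l -> exists M, forall n, Rabs (u n) <= M.
Proof.
  move=> /Un_cv_ultimately /(_ 1 Rlt_0_1) [N HN].
  have [M HM] : exists M, forall n, (n < N)%coq_nat -> Rabs (u n) <= M.
  { elim: N {HN} => [|k [M HM]]; first by exists 0 => n Hn; lia.
    exists (Rmax M (Rabs (u k))) => n Hn.
    case: (Nat.eq_dec n k) => [->|Hne]; first exact: Rmax_r.
    apply: Rle_trans (Rmax_l _ _); apply: HM; lia. }
  exists (Rmax M (Rabs l + 1)) => n.
  case: (Nat.lt_ge_cases n N) => h.
  - exact: Rle_trans (HM n h) (Rmax_l _ _).
  - apply: Rle_trans (Rmax_r _ _); have := HN n h; have := Rabs_triang_inv (u n) l; lra.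
Qed.

Lemma inv_succ_null : Un_cv (fun n => / INR (S n)) 0.
Proof.
  apply: null_of_ultimately => eps He.
  have [Hup _] := archimed (/ eps).
  have Hz : (0 <= up (/ eps))%Z by apply: le_IZR; have := Rinv_0_lt_compat _ He; lra.
  exists (Z.to_nat (up (/ eps))) => n Hn.
  have Hs : 0 < INR (S n) by apply: lt_0_INR; lia.
  have HI : / eps < INR (S n).
  { rewrite S_INR; have : INR (Z.to_nat (up (/ eps))) <= INR n by apply: le_INR.
    rewrite INR_IZR_INZ Z2Nat.id //; have := pos_INR n; lra. }
  rewrite Rabs_right; last by apply/Rle_ge/Rlt_le/Rinv_0_lt_compat.
  rewrite -(Rinv_inv eps); apply: Rinv_lt_contravar => //.
  apply: Rmult_lt_0_compat => //; exact: Rinv_0_lt_compat.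
Qed.

Section Series.
Variables (s : nat -> R) (Ssum : R).
Hypothesis s_ge0 : forall n, 0 <= s n.
Hypothesis s_cv : Un_cv (sum_f_R0 s) Ssum.

Lemma series_term_null : Un_cv s 0.
Proof.
  apply: null_of_ultimately => eps He.
  have [N HN] := proj1 (Un_cv_ultimately _ _) s_cv (eps / 2) ltac:(lra).
  exists (S N) => [[|n] Hn]; first lia.
  have h1 := HN n ltac:(lia); have h2 := HN (S n) ltac:(lia); rewrite /= in h2.
  apply: Rabs_def1; apply Rabs_def2 in h1; apply Rabs_def2 in h2; lra.
Qed.

Lemma series_partial_le n : sum_f_R0 s n <= Ssum.
Proof. by apply: (growing_ineq _ _ _ s_cv) => k /=; have := s_ge0 (S k); lra. Qed.

Lemma series_term_le n : s n <= Ssum.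
Proof.
  have := series_partial_le n; case: n => [|n] //=.
  have := cond_pos_sum s n s_ge0; lra.
Qed.

End Series.

Fixpoint sum_before (e : nat -> R) (n : nat) : R :=
  if n is S k then sum_before e k + e k else 0.

Lemma sum_before_S e n : sum_before e (S n) = sum_f_R0 e n.
Proof. by elim: n => [|n IH] /=; [ring | rewrite -IH /=]. Qed.

Lemma quasi_fejer (al e : nat -> R) Ssum :
  (forall n, 0 <= al n) -> (forall n, 0 <= e n) ->
  (forall n, al (S n) <= al n + e n) -> Un_cv (sum_f_R0 e) Ssum ->
  (exists L, Un_cv al L) /\ (forall n, al n <= al O + Ssum).
Proof.
  move=> Ha He Hs Hc.
  have Hsb : forall n, sum_before e n <= Ssum.
  { case=> [|n]; last by rewrite sum_before_S; exact: series_partial_le.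
    by have := series_partial_le e Ssum He Hc O; have := He O => /=; lra. }
  set be := fun n => al n - sum_before e n.
  have Hdec : Un_decreasing be by move=> n; rewrite /be /=; have := Hs n; lra.
  have Hle0 : forall n, be n <= be O by elim=> [|n IH]; [lra | have := Hdec n; lra].
  split; last by move=> n; have := Hle0 n; have := Hsb n; rewrite /be /=; lra.
  have Hbelow : has_lb be.
  { exists Ssum => r [i ->]; rewrite /opp_seq /be; have := Ha i; have := Hsb i; lra. }
  have [lb Hlb] := decreasing_cv be Hdec Hbelow.
  have Hp : Un_cv (sum_before e) Ssum.
  { move=> eps /Hc [N HN]; exists (S N) => [[|n] Hn]; first lia.
    rewrite sum_before_S; apply: HN; lia. }
  exists (lb + Ssum); apply: Un_cv_ext (CV_plus _ _ _ _ Hlb Hp) => n; rewrite /be; ring.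
Qed.

Section ClosedConvexSets.
Context {K : Hilbert}.
Implicit Types (y p q : K) (S : K -> Prop).

Definition hclosed S : Prop :=
  forall (s : nat -> K) l, (forall k, S (s k)) -> strong_cv s l -> S l.
Definition hconvex S : Prop :=
  forall a b t, 0 <= t <= 1 -> S a -> S b -> S (hadd (hscal t a) (hscal (1 - t) b)).

Lemma cauchy_strong_cv (u : nat -> K) :
  (forall eps, 0 < eps -> exists N, forall n k, (N <= n)%coq_nat -> (N <= k)%coq_nat ->
        hnorm (hsub (u n) (u k)) < eps) -> exists l, strong_cv u l.
Proof.
  move=> /hcomplete [l Hl]; exists l; apply: null_of_ultimately => eps /Hl [N HN].
  exists N => n Hn; rewrite Rabs_right; [exact: HN | exact/Rle_ge/hnorm_ge0].
Qed.

Lemma strong_cv_shift (s : nat -> K) l N :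
  strong_cv s l -> strong_cv (fun k => s (N + k)%coq_nat) l.
Proof. move=> H eps /H [M HM]; exists M => n Hn; apply: HM; rewrite /ge in Hn *; lia. Qed.

Lemma inner_null (s t : nat -> K) g :
  Un_cv (fun n => hnorm (hsub (s n) (t n))) 0 ->
  Un_cv (fun n => hinner (hsub (s n) (t n)) g) 0.
Proof.
  move=> H; apply: (null_squeeze _ (fun n => hnorm g * hnorm (hsub (s n) (t n)))).
  - by move=> n; rewrite Rmult_comm; exact: cauchy_schwarz.
  - exact: null_scal.
Qed.

Definition dist2 y q : R := hinner (hsub y q) (hsub y q).

Lemma dist2_convex_comb y p q t :
  dist2 y (hadd (hscal t q) (hscal (1 - t) p)) =
  dist2 y p - 2 * t * hinner (hsub y p) (hsub q p) + t * t * dist2 q p.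
Proof. rewrite /dist2; inner_expand; rewrite (hinner_sym q y) (hinner_sym p y) (hinner_sym q p); ring. Qed.

Lemma parallelogram_midpoint y q q' :
  dist2 q q' = 2 * dist2 y q + 2 * dist2 y q' -
               4 * dist2 y (hadd (hscal (/2) q) (hscal (1 - /2) q')).
Proof.
  rewrite /dist2; inner_expand; rewrite (hinner_sym q y) (hinner_sym q' y) (hinner_sym q' q).
  field.
Qed.

Lemma strong_cv_dist2 y (s : nat -> K) l :
  strong_cv s l -> Un_cv (fun n => dist2 y (s n)) (dist2 y l).
Proof.
  move=> H.
  have Hn : Un_cv (fun n => hnorm (hsub y (s n))) (hnorm (hsub y l)).
  { apply/Un_cv_ultimately => e /(null_ultimately _ H); apply: ultimately_impl => n h.
    rewrite Rabs_right in h; last exact/Rle_ge/hnorm_ge0.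
    have := hnorm_sub_triangle y l (s n); have := hnorm_sub_triangle y (s n) l.
    rewrite (hnorm_sub_sym l (s n)) => *; apply: Rle_lt_trans h; apply: Rabs_le; lra. }
  apply: (Un_cv_ext (fun n => hnorm (hsub y (s n)) * hnorm (hsub y (s n)))).
  - by move=> n; rewrite hnorm_mul.
  - by rewrite /dist2 -hnorm_mul; exact: CV_mult.
Qed.

Lemma dist2_infimum S y : (exists a, S a) ->
  exists d, 0 <= d /\ (forall q, S q -> d <= dist2 y q) /\
            (forall eps, 0 < eps -> exists q, S q /\ dist2 y q < d + eps).
Proof.
  move=> [a Sa].
  pose E r := exists q, S q /\ r = - dist2 y q.
  have HE : bound E by exists 0 => r [q [_ ->]]; have := hinner_pos (hsub y q); rewrite /dist2; lra.
  have [mm [Hub Hlub]] := completeness E HE (ex_intro _ _ (ex_intro _ a (conj Sa erefl))).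
  exists (- mm); split; [|split].
  - have : mm <= 0 by apply: Hlub => r [q [_ ->]]; have := hinner_pos (hsub y q); rewrite /dist2; lra.
    lra.
  - by move=> q Sq; have := Hub _ (ex_intro _ q (conj Sq erefl)); lra.
  - move=> eps He; apply: NNPP => Hn.
    suff /Hlub : is_upper_bound E (mm - eps) by lra.
    move=> r [q [Sq ->]]; apply: Rnot_lt_le => Hq; apply: Hn; exists q; split => //; lra.
Qed.

(* Projection theorem, existence part: a nonempty closed convex set contains a
   point of minimal distance to y (minimizing sequences are Cauchy by the
   parallelogram law). *)
Lemma projection_minimizer S y :
  hclosed S -> hconvex S -> (exists a, S a) ->
  exists p, S p /\ forall q, S q -> dist2 y p <= dist2 y q.
Proof.
  move=> Hcl Hcv /(dist2_infimum _ y) [d [Hd [Hlow Happ]]].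
  have [qn Hqn] := choice (fun (n : nat) q => S q /\ dist2 y q < d + / INR n.+1)
    (fun n => Happ _ (Rinv_0_lt_compat _ (lt_0_INR _ (Nat.lt_0_succ n)))).
  have Hclose : forall n k, dist2 (qn n) (qn k) <= 2 * / INR n.+1 + 2 * / INR k.+1.
  { move=> n k; have [Sn Dn] := Hqn n; have [Sk Dk] := Hqn k.
    have := Hlow _ (Hcv _ _ (/2) ltac:(lra) Sn Sk).
    rewrite (parallelogram_midpoint y (qn n) (qn k)); lra. }
  have [p Hp] : exists p, strong_cv qn p.
  { apply: cauchy_strong_cv => eps He.
    have [N HN] := null_ultimately _ inv_succ_null (eps * eps / 4) ltac:(nra).
    exists N => n k Hn Hk; apply: lt_of_sq_lt; [exact: hnorm_ge0 | lra |].
    rewrite hnorm_mul; have := Hclose n k; have := HN n Hn; have := HN k Hk.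
    rewrite !Rabs_right; try (apply/Rle_ge/Rlt_le/Rinv_0_lt_compat/lt_0_INR; lia).
    rewrite /dist2; lra. }
  exists p; split; first by apply: (Hcl qn) => // k; case: (Hqn k).
  move=> q Sq; apply: Rle_trans _ (Hlow _ Sq).
  have Hlim : Un_cv (fun n => d + / INR n.+1) d.
  { by have := CV_plus _ _ _ _ (cv_const d) inv_succ_null; rewrite Rplus_0_r. }
  apply: (Rle_cv_lim _ (strong_cv_dist2 y _ _ Hp) Hlim) => n.
  exact/Rlt_le/(proj2 (Hqn n)).
Qed.

Lemma projection_variational S y p :
  hconvex S -> S p -> (forall q, S q -> dist2 y p <= dist2 y q) ->
  forall q, S q -> hinner (hsub y p) (hsub q p) <= 0.
Proof.
  move=> Hcv Sp Hmin q Sq.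
  have H2 : 0 <= dist2 q p / 2 by have := hinner_pos (hsub q p); rewrite /dist2; lra.
  apply: (nonpos_of_small_multiples _ _ H2) => t Ht.
  have := Hmin _ (Hcv q p t ltac:(lra) Sq Sp); rewrite dist2_convex_comb => h.
  apply: (Rmult_le_reg_l (2 * t)); nra.
Qed.

Lemma dist2_sym y q : dist2 y q = dist2 q y.
Proof. by rewrite /dist2; inner_expand; rewrite (hinner_sym y q); ring. Qed.

Lemma dist2_zero q : dist2 hzero q = hinner q q.
Proof. by rewrite /dist2; inner_expand; ring. Qed.

Lemma min_norm_pythagoras S p q :
  hconvex S -> S p -> (forall q, S q -> dist2 hzero p <= dist2 hzero q) -> S q ->
  dist2 q p <= dist2 hzero q - dist2 hzero p.
Proof.
  move=> Hcv Sp Hmin Sq; have := projection_variational _ _ _ Hcv Sp Hmin _ Sq.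
  rewrite !dist2_zero /dist2; inner_expand; rewrite (hinner_sym p q); lra.
Qed.

Definition halfspace (g : K) (c : R) : K -> Prop := fun v => c <= hinner v g.

Lemma halfspace_closed g c : hclosed (halfspace g c).
Proof.
  move=> s l Hs Hc; rewrite /halfspace; apply: Rnot_lt_le => h.
  have [N HN] := null_ultimately _ (inner_null s (fun _ => l) g Hc) (c - hinner l g) ltac:(lra).
  have := HN N (le_n N); have := Hs N; rewrite /halfspace inner_subl => h1 /Rabs_def2; lra.
Qed.

Lemma halfspace_convex g c : hconvex (halfspace g c).
Proof. move=> u v t Ht; rewrite /halfspace hinner_add !hinner_scal => *; nra. Qed.

End ClosedConvexSets.

Section HullPoints.
Context {K : Hilbert}.

(* A decreasing sequence of nonempty closed convex sets containing uniformly
   bounded points has a common point: the squared norms of the minimal-norm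
   points increase to a finite limit, which makes these points Cauchy.  This
   replaces the weak sequential compactness of bounded sets. *)
Lemma nested_closed_convex_meet (C : nat -> K -> Prop) M :
  (forall N, hclosed (C N)) -> (forall N, hconvex (C N)) ->
  (forall N N' y, (N <= N')%coq_nat -> C N' y -> C N y) ->
  (forall N, exists a, C N a /\ hnorm a <= M) ->
  exists q, forall N, C N q.
Proof.
  move=> Hcl Hcv Hmono Hne.
  have Hmin_ex : forall N, exists p, C N p /\ forall q, C N q -> dist2 hzero p <= dist2 hzero q.
  { move=> N; apply: projection_minimizer => //; have [a [Ca _]] := Hne N; by exists a. }
  have [qq Hqq] := choice _ Hmin_ex.
  pose a N := dist2 hzero (qq N).
  have Hincr : forall N N', (N <= N')%coq_nat -> dist2 (qq N') (qq N) <= a N' - a N.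
  { move=> N N' HN; have [CN Hmin] := Hqq N; have [CN' _] := Hqq N'.
    exact: min_norm_pythagoras (Hcv N) CN Hmin (Hmono _ _ _ HN CN'). }
  have Hbnd : forall N, a N <= M * M.
  { move=> N; have [b [Cb Hb]] := Hne N; have [_ Hmin] := Hqq N.
    have := Hmin _ Cb; rewrite /a !dist2_zero -(hnorm_mul b); have := hnorm_ge0 b; nra. }
  have Hgrow : Un_growing a.
  { by move=> N; have := Hincr N (S N) ltac:(lia); have := hinner_pos (hsub (qq (S N)) (qq N));
      rewrite /dist2; lra. }
  have Habove : has_ub a by exists (M * M) => r [i ->].
  have [la Hla] := growing_cv a Hgrow Habove.
  have [q Hq] : exists q, strong_cv qq q.
  { apply: cauchy_strong_cv => eps He.
    have [N HN] := proj1 (Un_cv_ultimately _ _) Hla (eps * eps / 2) ltac:(nra).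
    exists N => n k Hn Hk; apply: lt_of_sq_lt; [exact: hnorm_ge0 | lra |].
    rewrite hnorm_mul -/(dist2 (qq n) (qq k)).
    have /Rabs_def2 h1 := HN n Hn; have /Rabs_def2 h2 := HN k Hk.
    case: (Nat.le_ge_cases n k) => Hnk; last by have := Hincr k n Hnk; lra.
    by have := Hincr n k Hnk; rewrite dist2_sym; lra. }
  exists q => N; apply: (Hcl N (fun k => qq (N + k)%coq_nat)); last exact: strong_cv_shift.
  by move=> k; apply: (Hmono N (N + k)%coq_nat); [lia | case: (Hqq (N + k)%coq_nat)].
Qed.

(* q is a hull point of v along the indices P if q lies in every closed convex
   set that ultimately contains the terms v_n with P n.  Hull points play the
   role of weak cluster points. *)
Definition hull_point (v : nat -> K) (P : nat -> Prop) (q : K) : Prop :=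
  forall C : K -> Prop, hclosed C -> hconvex C ->
    ultimately (fun n => P n -> C (v n)) -> C q.

Lemma hull_point_exists (v : nat -> K) M (P : nat -> Prop) :
  (forall n, hnorm (v n) <= M) -> (forall N, exists n, (N <= n)%coq_nat /\ P n) ->
  exists q, hull_point v P q.
Proof.
  move=> HM Hinf.
  pose T N y := forall C : K -> Prop, hclosed C -> hconvex C ->
     (forall n, (N <= n)%coq_nat -> P n -> C (v n)) -> C y.
  have [q Hq] : exists q, forall N, T N q.
  { apply: (nested_closed_convex_meet T M).
    - move=> N s l Hs Hc C HC1 HC2 HC3; apply: (HC1 s) => // k; exact: (Hs k C).
    - move=> N a b t Ht Ha Hb C HC1 HC2 HC3; apply: (HC2) => //; [exact: (Ha C) | exact: (Hb C)].
    - move=> N N' y HN Hy C H1 H2 H3; apply: Hy => // n Hn; apply: H3; lia.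
    - move=> N; have [n [Hn Pn]] := Hinf N.
      by exists (v n); split; [move=> C _ _ HC; exact: HC | exact: HM]. }
  by exists q => C HC1 HC2 [N HN]; apply: (Hq N).
Qed.

Lemma hull_point_halfspace v P q g c :
  hull_point v P q -> ultimately (fun n => P n -> c <= hinner (v n) g) -> c <= hinner q g.
Proof. by move=> Hq; apply: (Hq (halfspace g c)); [exact: halfspace_closed | exact: halfspace_convex]. Qed.

Lemma hull_point_inner_limit v P q g beta :
  hull_point v P q -> Un_cv (fun n => hinner (v n) g) beta -> hinner q g = beta.
Proof.
  move=> Hq /Un_cv_ultimately Hcv; apply: Rle_antisym; apply: Rle_plus_epsilon => eta He.
  - suff : - beta - eta <= hinner q (hopp g) by rewrite inner_oppr; lra.
    apply: (hull_point_halfspace _ _ _ _ _ Hq); apply: ultimately_impl (Hcv eta He) => n.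
    by rewrite inner_oppr => /Rabs_def2; lra.
  - suff : beta - eta <= hinner q g by lra.
    apply: (hull_point_halfspace _ _ _ _ _ Hq); apply: ultimately_impl (Hcv eta He) => n.
    by move=> /Rabs_def2; lra.
Qed.

End HullPoints.

Section Subdifferentials.
Context {K : Hilbert}.
Implicit Types (f : K -> eR) (x y p u : K).

Definition is_subgradient f x u : Prop :=
  exists fx, f x = Fin fx /\ forall y, Rext_le (Fin (fx + hinner (hsub y x) u)) (f y).

Definition is_prox (gam : R) f y p : Prop :=
  forall q,
    Rext_le (Rext_add (Rext_scal gam (f p)) (Fin (/2 * hnorm (hsub y p) ^ 2)))
            (Rext_add (Rext_scal gam (f q)) (Fin (/2 * hnorm (hsub y q) ^ 2))).

Lemma convex_fun_fin f a b t fa fb : convex_fun hadd hscal f -> 0 < t < 1 ->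
  f a = Fin fa -> f b = Fin fb ->
  exists fc, f (hadd (hscal t a) (hscal (1 - t) b)) = Fin fc /\ fc <= t * fa + (1 - t) * fb.
Proof.
  move=> Hc Ht Ha Hb; have := Hc a b t Ht; rewrite Ha Hb /=.
  by case: (f _) => [r|] //= Hr; exists r.
Qed.

Lemma prox_subgradient gam f y p : 0 < gam -> proper_fun f -> convex_fun hadd hscal f ->
  is_prox gam f y p -> is_subgradient f p (hscal (/ gam) (hsub y p)).
Proof.
  move=> Hg [q0 Hq0] Hc Hp.
  have [fp Efp] : exists fp, f p = Fin fp.
  { move: (Hp q0); case: (f q0) Hq0 => [r|] // _; case: (f p) => [s|] //= _; by exists s. }
  exists fp; split => // q; case Eq: (f q) => [fq|] //=.
  have Key : gam * fp - gam * fq + hinner (hsub y p) (hsub q p) <= 0.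
  { have H2 : 0 <= dist2 q p / 2 by have := hinner_pos (hsub q p); rewrite /dist2; lra.
    apply: (nonpos_of_small_multiples _ _ H2) => t Ht.
    have [fc [Efc Hfc]] := convex_fun_fin f q p t fq fp Hc Ht Eq Efp.
    have := Hp (hadd (hscal t q) (hscal (1 - t) p)); rewrite !hnorm_pow2 Efp Efc /=.
    rewrite -/(dist2 y p) -/(dist2 y _) dist2_convex_comb => h.
    apply: (Rmult_le_reg_l t); [lra | nra]. }
  rewrite inner_scalr hinner_sym; set X := hinner (hsub y p) (hsub q p) in Key *.
  apply: (Rmult_le_reg_l gam) => //.
  have -> : gam * (fp + / gam * X) = gam * fp + X by field; lra.
  lra.
Qed.

Lemma subgradient_monotone f x x' u u' : is_subgradient f x u -> is_subgradient f x' u' ->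
  0 <= hinner (hsub x x') (hsub u u').
Proof.
  move=> [fx [Ex Hx]] [fx' [Ex' Hx']].
  have := Hx x'; rewrite Ex' /=; have := Hx' x; rewrite Ex /=; inner_expand.
  rewrite ?(hinner_sym u x) ?(hinner_sym u x') ?(hinner_sym u' x) ?(hinner_sym u' x'); lra.
Qed.

Lemma gradient_subgradient (phi : K -> eR) x u :
  convex_fun hadd hscal phi -> has_gradient phi x u -> is_subgradient phi x u.
Proof.
  move=> Hc [px [Ex Hd]]; exists px; split => // v.
  case Ev: (phi v) => [pv|] //=; set w := hsub v x; have Hw := hnorm_ge0 w.
  suff Key : px + hinner w u - pv <= 0 by move: Key; rewrite hinner_sym; lra.
  apply: (nonpos_of_small_multiples _ _ Hw) => eps He.
  have [d [Hd0 Hdd]] := Hd eps (proj1 He).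
  (* a step t in ]0,1[ small enough that x + t w lies in the ball of radius d *)
  have [t [Ht Htw]] : exists t, 0 < t < 1 /\ hnorm (hscal t w) < d.
  { exists (Rmin (/2) (d / (2 * (hnorm w + 1)))).
    have Ht0 : 0 < Rmin (/2) (d / (2 * (hnorm w + 1))).
    { by apply: Rmin_pos; [lra | apply: Rdiv_lt_0_compat; lra]. }
    have Ht1 := Rmin_l (/2) (d / (2 * (hnorm w + 1))).
    have Ht2 := Rmin_r (/2) (d / (2 * (hnorm w + 1))).
    split; first lra.
    rewrite hnorm_scal Rabs_right; last lra.
    have := Rmult_le_compat_r (2 * (hnorm w + 1)) _ _ ltac:(lra) Ht2.
    have -> : d / (2 * (hnorm w + 1)) * (2 * (hnorm w + 1)) = d by field; lra.
    nra. }
  have [ph [Eph Hph]] := Hdd _ Htw.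
  have Eseg : hadd x (hscal t w) = hadd (hscal t v) (hscal (1 - t) x).
  { by apply: vec_ext => z; rewrite /w; inner_expand; ring. }
  have [fc [Efc Hfc]] := convex_fun_fin phi v x t pv px Hc Ht Ev Ex.
  rewrite Eseg Efc in Eph; case: Eph => <- in Hph.
  rewrite hnorm_scal (Rabs_right t) ?inner_scalr in Hph; last lra.
  have := Rle_abs (- (fc - px - t * hinner u w)); rewrite Rabs_Ropp (hinner_sym w u) => h.
  apply: (Rmult_le_reg_l t); [lra | nra].
Qed.

Definition affine_sublevel f (w : K) (c : R) : K -> Prop :=
  fun v => exists fv, f v = Fin fv /\ fv + hinner v w <= c.

Lemma affine_sublevel_convex f w c :
  convex_fun hadd hscal f -> hconvex (affine_sublevel f w c).
Proof.
  move=> Hconv a b t [Ht0 Ht1] [fa [Ea Ha]] [fb [Eb Hb]].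
  case: (Rle_lt_or_eq_dec 0 t Ht0) => [Ht0'|<-].
  - case: (Rle_lt_or_eq_dec t 1 Ht1) => [Ht1'|->].
    + have [fc [Ec Hfc]] := convex_fun_fin f a b t fa fb Hconv (conj Ht0' Ht1') Ea Eb.
      by exists fc; split => //; rewrite hinner_add !hinner_scal; nra.
    + have -> : hadd (hscal 1 a) (hscal (1 - 1) b) = a by apply: vec_ext => z; inner_expand; ring.
      by exists fa.
  - have -> : hadd (hscal 0 a) (hscal (1 - 0) b) = b by apply: vec_ext => z; inner_expand; ring.
    by exists fb.
Qed.

Lemma affine_sublevel_closed f w c :
  lsc_fun (fun u v => hnorm (hsub u v)) f -> hclosed (affine_sublevel f w c).
Proof.
  move=> Hlsc s l Hs Hc; apply: NNPP => Hn.
  have [eta [Heta Hr]] : exists eta, 0 < eta /\ Rext_lt (Fin (c - hinner l w + eta)) (f l).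
  { case E: (f l) => [fl|]; last by exists 1; split => //; lra.
    exists ((fl + hinner l w - c) / 2).
    have Hgt : c < fl + hinner l w by apply: Rnot_le_lt => h; apply: Hn; exists fl.
    split => /=; lra. }
  have [d [Hd Hdd]] := Hlsc l _ Hr.
  have [N HN] := ultimately_and _ _ (null_ultimately _ Hc d Hd)
                   (null_ultimately _ (inner_null s (fun _ => l) w Hc) eta Heta).
  have [h1 /Rabs_def2 h2] := HN N (le_n N).
  rewrite Rabs_right in h1; last exact/Rle_ge/hnorm_ge0.
  have := Hdd (s N) h1; have [fk [Ek Hk]] := Hs N; rewrite Ek /=.
  rewrite inner_subl in h2; lra.
Qed.

End Subdifferentials.

Section ForwardBackward.
Context {K : Hilbert}.
Variables (f : K -> eR) (B : K -> K) (chi eps : R) (gam : nat -> R) (x a b p : nat -> K).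
Hypothesis f_proper : proper_fun f.
Hypothesis f_lsc : lsc_fun (fun u v => hnorm (hsub u v)) f.
Hypothesis f_convex : convex_fun hadd hscal f.
Hypothesis B_cocoercive : forall u v,
  hinner (hsub (B u) (B v)) (hsub u v) >= / chi * hnorm (hsub (B u) (B v)) ^ 2.
Hypothesis chi_pos : 0 < chi.
Hypothesis eps_range : 0 < eps < 2 / (chi + 1).
Hypothesis gam_range : forall n, eps <= gam n <= (2 - eps) / chi.
Hypothesis a_summable : abs_summable a.
Hypothesis b_summable : abs_summable b.

Definition fwd n : K := hsub (x n) (hscal (gam n) (hadd (B (x n)) (a n))).
Hypothesis p_prox : forall n, is_prox (gam n) f (fwd n) (p n).
Hypothesis x_next : forall n, x (S n) = hadd (p n) (b n).

Definition ugrad n : K := hscal (/ gam n) (hsub (fwd n) (p n)).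

Definition gam_max : R := (2 - eps) / chi.
Definition kappa : R := eps * eps / chi.

Lemma gam_pos n : 0 < gam n.
Proof. have := gam_range n; lra. Qed.

Lemma gam_max_pos : 0 < gam_max.
Proof.
  (* eps < 2 / (chi + 1) < 2 *)
  have : 2 / (chi + 1) < 2.
  { apply: (Rmult_lt_reg_r (chi + 1)); first lra.
    have -> : 2 / (chi + 1) * (chi + 1) = 2 by field; lra.
    nra. }
  by move=> h; apply: Rdiv_lt_0_compat; lra.
Qed.

Lemma kappa_pos : 0 < kappa.
Proof. by apply: Rdiv_lt_0_compat => //; nra. Qed.

Lemma gam_kappa n : kappa <= 2 * gam n / chi - gam n * gam n.
Proof.
  have [h1 h2] := gam_range n.
  have e1 : gam n * chi <= 2 - eps.
  { have := Rmult_le_compat_r chi _ _ (Rlt_le _ _ chi_pos) h2.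
    by have -> : (2 - eps) / chi * chi = 2 - eps by field; lra. }
  have -> : 2 * gam n / chi - gam n * gam n = gam n * (2 - gam n * chi) / chi by field; lra.
  apply: Rmult_le_compat_r; first exact/Rlt_le/Rinv_0_lt_compat.
  have := proj1 eps_range; nra.
Qed.

Lemma ugrad_subgradient n : is_subgradient f (p n) (ugrad n).
Proof. exact: prox_subgradient (gam_pos n) f_proper f_convex (p_prox n). Qed.

Section StepEstimates.
Variable c : K.
Hypothesis c_zero : is_subgradient f c (hopp (B c)).

Definition dist_x n : R := hnorm (hsub (x n) c).
Definition dB n : K := hsub (B (x n)) (B c).
(* gam_n (ugrad_n + B c): the residual of the backward step. *)
Definition res n : K := hadd (hsub (fwd n) (p n)) (hscal (gam n) (B c)).
Definition sa n : R := hnorm (a n).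
Definition sb n : R := hnorm (b n).
Definition err n : R := 2 * dist_x n * gam_max * sa n + gam_max * gam_max * (sa n * sa n)
                        + 2 * (dist_x n + gam_max * sa n) * sb n + sb n * sb n.

(* (x_n - gam_n B x_n) - (c - gam_n B c): the exact forward steps from x_n and c. *)
Definition fwd_diff n : K := hsub (hsub (x n) c) (hscal (gam n) (dB n)).

(* Cocoercivity makes the error-free forward step a strict contraction towards c
   in the direction of B. *)
Lemma fb_forward_contraction n :
  hnorm (fwd_diff n) ^ 2 <= dist_x n ^ 2 - kappa * hnorm (dB n) ^ 2.
Proof.
  have coco := B_cocoercive (x n) c; rewrite -/(dB n) in coco.
  rewrite /fwd_diff hnorm_sub_scal_pow2 /dist_x.
  have := gam_kappa n; have := gam_pos n; have := pow2_ge_0 (hnorm (dB n)).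
  have := pow2_ge_0 (hnorm (hsub (x n) c)); move=> *; nra.
Qed.

Lemma fb_forward_dist n : hnorm (fwd_diff n) <= dist_x n.
Proof.
  apply: le_of_sq_le; [exact: hnorm_ge0 | exact: hnorm_ge0 |].
  have := fb_forward_contraction n; have := kappa_pos; have := pow2_ge_0 (hnorm (dB n)).
  rewrite /= !Rmult_1_r => *; nra.
Qed.

(* Monotonicity of df makes the backward step firmly nonexpansive: the residual
   splits off orthogonally-or-better from the distance of p_n to c. *)
Lemma fb_backward_split n :
  hnorm (hsub (p n) c) ^ 2 + hnorm (res n) ^ 2 <=
  (hnorm (fwd_diff n) + gam n * sa n) ^ 2.
Proof.
  set d := hsub (p n) c; have g0 := gam_pos n.
  have Hdr : 0 <= hinner d (res n).
  { have := subgradient_monotone _ _ _ _ _ (ugrad_subgradient n) c_zero.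
    have -> : hsub (ugrad n) (hopp (B c)) = hscal (/ gam n) (res n).
    { by apply: vec_ext => z; rewrite /ugrad /res; inner_expand; field; lra. }
    rewrite inner_scalr -/d => h.
    have := Rinv_0_lt_compat _ g0; nra. }
  have Hsplit : hadd d (res n) = hsub (fwd_diff n) (hscal (gam n) (a n)).
  { by apply: vec_ext => z; rewrite /d /fwd_diff /res /dB /fwd; inner_expand; ring. }
  have Hle : hnorm (hadd d (res n)) <= hnorm (fwd_diff n) + gam n * sa n.
  { rewrite Hsplit; apply: Rle_trans (hnorm_sub_le _ _) _.
    by rewrite hnorm_scal Rabs_right /sa; lra. }
  have := hnorm_add_pow2 d (res n); have := hnorm_ge0 (hadd d (res n)).
  rewrite /= !Rmult_1_r => *; nra.
Qed.

Lemma fb_prox_dist n : hnorm (hsub (p n) c) <= hnorm (fwd_diff n) + gam n * sa n.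
Proof.
  apply: le_of_sq_le; first exact: hnorm_ge0.
  - have := hnorm_ge0 (fwd_diff n).
    have := gam_pos n; have := hnorm_ge0 (a n); rewrite /sa; nra.
  - have := fb_backward_split n; have := pow2_ge_0 (hnorm (res n)); rewrite /= !Rmult_1_r; lra.
Qed.

Lemma fb_dist_next n : dist_x (S n) <= hnorm (hsub (p n) c) + sb n.
Proof.
  rewrite /dist_x x_next.
  have -> : hsub (hadd (p n) (b n)) c = hadd (hsub (p n) c) (b n)
    by apply: vec_ext => z; inner_expand; ring.
  exact: hnorm_add_le.
Qed.

Lemma fb_dist_growth n : dist_x (S n) <= dist_x n + (gam_max * sa n + sb n).
Proof.
  have := fb_dist_next n; have := fb_prox_dist n; have := fb_forward_dist n.
  have := Rmult_le_compat_r (sa n) _ _ (hnorm_ge0 (a n)) (proj2 (gam_range n)).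
  rewrite /gam_max; lra.
Qed.

Lemma fb_energy n :
  kappa * hnorm (dB n) ^ 2 + hnorm (res n) ^ 2 <= dist_x n ^ 2 - dist_x (S n) ^ 2 + err n.
Proof.
  have HE := fb_forward_dist n; have HE2 := fb_forward_contraction n.
  have Hsplit := fb_backward_split n; have Hd := fb_prox_dist n; have Hnext := fb_dist_next n.
  have Hg := gam_range n; have g0 := gam_pos n.
  have gsa : gam n * sa n <= gam_max * sa n.
  { exact: Rmult_le_compat_r (hnorm_ge0 _) (proj2 Hg). }
  have := hnorm_ge0 (fwd_diff n); have := hnorm_ge0 (hsub (p n) c); have := hnorm_ge0 (a n);
  have := hnorm_ge0 (b n); have := hnorm_ge0 (hsub (x (S n)) c).
  rewrite /err /sa /sb /dist_x /= !Rmult_1_r in HE HE2 Hsplit Hd Hnext gsa * => *.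
  have h1 : hnorm (fwd_diff n) * (gam n * hnorm (a n)) <= hnorm (hsub (x n) c) * (gam_max * hnorm (a n))
    by apply: Rmult_le_compat; nra.
  have h2 : gam n * hnorm (a n) * (gam n * hnorm (a n)) <= gam_max * hnorm (a n) * (gam_max * hnorm (a n))
    by apply: Rmult_le_compat; nra.
  have h3 : hnorm (hsub (x (S n)) c) * hnorm (hsub (x (S n)) c) <=
            (hnorm (hsub (p n) c) + hnorm (b n)) * (hnorm (hsub (p n) c) + hnorm (b n))
    by apply: Rmult_le_compat; lra.
  have h4 : hnorm (hsub (p n) c) * hnorm (b n) <= (hnorm (hsub (x n) c) + gam_max * hnorm (a n)) * hnorm (b n)
    by apply: Rmult_le_compat_r; lra.
  nra.
Qed.

Lemma fb_ugrad_residual n : hnorm (hadd (ugrad n) (B c)) <= / eps * hnorm (res n).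
Proof.
  have g0 := gam_pos n; have Hg := gam_range n.
  have -> : hadd (ugrad n) (B c) = hscal (/ gam n) (res n).
  { by apply: vec_ext => z; rewrite /ugrad /res; inner_expand; field; lra. }
  rewrite hnorm_scal Rabs_right; last exact/Rle_ge/Rlt_le/Rinv_0_lt_compat.
  apply: Rmult_le_compat_r; first exact: hnorm_ge0.
  apply: Rinv_le_contravar; lra.
Qed.

Lemma fb_x_minus_p n :
  hnorm (hsub (x n) (p n)) <= hnorm (res n) + gam_max * hnorm (dB n) + gam_max * sa n.
Proof.
  have g0 := gam_pos n; have Hg := gam_range n.
  have -> : hsub (x n) (p n) = hadd (hadd (res n) (hscal (gam n) (dB n))) (hscal (gam n) (a n)).
  { by apply: vec_ext => z; rewrite /res /dB /fwd; inner_expand; ring. }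
  apply: Rle_trans (hnorm_add_le _ _) _; rewrite !hnorm_scal !Rabs_right; try lra.
  have := hnorm_add_le (res n) (hscal (gam n) (dB n)); rewrite hnorm_scal Rabs_right; last lra.
  have := Rmult_le_compat_r (hnorm (dB n)) _ _ (hnorm_ge0 _) (proj2 Hg).
  have := Rmult_le_compat_r (sa n) _ _ (hnorm_ge0 _) (proj2 Hg).
  rewrite /gam_max /sa; lra.
Qed.

Lemma fb_dist_cv : (exists L, Un_cv dist_x L) /\ (exists A, forall n, dist_x n <= A).
Proof.
  have [Sa HSa] := a_summable; have [Sb HSb] := b_summable.
  have Hsum : Un_cv (sum_f_R0 (fun n => gam_max * sa n + sb n)) (gam_max * Sa + Sb).
  { apply: (Un_cv_ext (fun N => gam_max * sum_f_R0 sa N + sum_f_R0 sb N)).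
    - by elim=> [|N IH] /=; [ring | rewrite -IH; ring].
    - exact: CV_plus (cv_scal _ _ _ HSa) HSb. }
  have Hgrow : forall n, 0 <= gam_max * sa n + sb n.
  { by move=> n; have := gam_max_pos; have := hnorm_ge0 (a n); have := hnorm_ge0 (b n);
      rewrite /sa /sb; nra. }
  have [Hcv Hbnd] := quasi_fejer dist_x _ _ (fun n => hnorm_ge0 _) Hgrow fb_dist_growth Hsum.
  by split => //; exists (dist_x O + (gam_max * Sa + Sb)).
Qed.

Lemma fb_energy_null : Un_cv (fun n => dist_x n ^ 2 - dist_x (S n) ^ 2 + err n) 0.
Proof.
  have [[L HL] [A HA]] := fb_dist_cv.
  have [Sa HSa] := a_summable; have [Sb HSb] := b_summable.
  have Hsq : Un_cv (fun n => dist_x n ^ 2) (L * L).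
  { apply: (Un_cv_ext (fun n => dist_x n * dist_x n)); [by move=> n; ring | exact: CV_mult]. }
  have bound_abs : forall (u : nat -> R) M, (forall n, 0 <= u n) -> (forall n, u n <= M) ->
      forall n, Rabs (u n) <= M.
  { by move=> u M H0 HM n; rewrite Rabs_right; [exact: HM | exact/Rle_ge/H0]. }
  have sa0 : forall n, 0 <= sa n by move=> n; exact: hnorm_ge0.
  have sb0 : forall n, 0 <= sb n by move=> n; exact: hnorm_ge0.
  have dist_bnd := bound_abs _ _ (fun n => hnorm_ge0 _) HA.
  have sa_bnd := bound_abs _ _ sa0 (series_term_le _ _ sa0 HSa).
  have sb_bnd := bound_abs _ _ sb0 (series_term_le _ _ sb0 HSb).
  have sa_null := series_term_null _ _ HSa; have sb_null := series_term_null _ _ HSb.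
  apply: null_plus.
  - by have := CV_minus _ _ _ _ Hsq (cv_shift _ _ Hsq); rewrite Rminus_diag.
  - apply: (Un_cv_ext (fun n => 2 * gam_max * (dist_x n * sa n) + gam_max * gam_max * (sa n * sa n)
                            + 2 * (dist_x n * sb n) + 2 * gam_max * (sa n * sb n) + sb n * sb n)).
    + by move=> n; rewrite /err; ring.
    + repeat apply: null_plus; try apply: null_scal.
      * exact: null_mul_bounded _ _ _ dist_bnd sa_null.
      * exact: null_mul_bounded _ _ _ sa_bnd sa_null.
      * exact: null_mul_bounded _ _ _ dist_bnd sb_null.
      * exact: null_mul_bounded _ _ _ sa_bnd sb_null.
      * exact: null_mul_bounded _ _ _ sb_bnd sb_null.
Qed.

Lemma fb_dB_null : Un_cv (fun n => hnorm (dB n)) 0.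
Proof.
  apply: (null_of_sq_le _ _ _ kappa_pos (fun n => hnorm_ge0 _) _ fb_energy_null) => n.
  have := fb_energy n; have := pow2_ge_0 (hnorm (res n)); lra.
Qed.

Lemma fb_res_null : Un_cv (fun n => hnorm (res n)) 0.
Proof.
  apply: (null_of_sq_le _ _ _ Rlt_0_1 (fun n => hnorm_ge0 _) _ fb_energy_null) => n.
  have := fb_energy n; have := pow2_ge_0 (hnorm (dB n)); have := kappa_pos; nra.
Qed.

Lemma fb_ugrad_null : Un_cv (fun n => hnorm (hadd (ugrad n) (B c))) 0.
Proof.
  apply: (null_squeeze _ (fun n => / eps * hnorm (res n))); last exact: null_scal fb_res_null.
  by move=> n; rewrite Rabs_right; [exact: fb_ugrad_residual | exact/Rle_ge/hnorm_ge0].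
Qed.

Lemma fb_x_minus_p_null : Un_cv (fun n => hnorm (hsub (x n) (p n))) 0.
Proof.
  have [Sa HSa] := a_summable.
  have sa_null := series_term_null _ _ HSa.
  apply: (null_squeeze _ (fun n => hnorm (res n) + gam_max * hnorm (dB n) + gam_max * sa n)).
  - by move=> n; rewrite Rabs_right; [exact: fb_x_minus_p | exact/Rle_ge/hnorm_ge0].
  - apply: null_plus; first apply: null_plus.
    + exact: fb_res_null.
    + exact: null_scal fb_dB_null.
    + exact: null_scal sa_null.
Qed.

End StepEstimates.

(* A pointwise consequence of cocoercivity: for u, v, z and a reference w,
   <B u - w, u - z> is at least chi^-1 |B u - w|^2 up to error terms that
   vanish when B v -> w and v - z -> 0. *)
Lemma cocoercive_shift u v w z :
  / chi * hnorm (hsub (B u) w) ^ 2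
  - 2 / chi * (hnorm (hsub (B u) w) * hnorm (hsub (B v) w))
  - hnorm (hsub (B v) w) * hnorm (hsub u v) - hnorm (hsub (B u) w) * hnorm (hsub v z)
  <= hinner (hsub (B u) w) (hsub u z).
Proof.
  set g := hsub (B u) w; set h := hsub (B v) w.
  have coco := B_cocoercive u v.
  have Egh : hsub (B u) (B v) = hsub g h by apply: vec_ext => y; rewrite /g /h; inner_expand; ring.
  rewrite Egh hnorm_sub_pow2 in coco; clearbody g h.
  have Hinner : hinner (hsub g h) (hsub u v) =
                hinner g (hsub u z) + hinner g (hsub z v) - hinner h (hsub u v)
    by inner_expand; ring.
  rewrite Hinner in coco.
  have := inner_le_norms g h; have := inner_le_norms g (hsub z v); have := inner_ge_neg_norms h (hsub u v).
  rewrite (hnorm_sub_sym z v) => c1 c2 c3.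
  have ic := Rinv_0_lt_compat _ chi_pos; have := pow2_ge_0 (hnorm h).
  have := Rmult_le_compat_l (/ chi) _ _ (Rlt_le _ _ ic) c1.
  rewrite /Rdiv; nra.
Qed.

Hypothesis zero_exists : exists z, is_subgradient f z (hopp (B z)).

Lemma fb_prox_bounded : exists M, forall n, hnorm (p n) <= M.
Proof.
  have [c Hc] := zero_exists; have [_ [A HA]] := fb_dist_cv c Hc.
  have [M1 HM1] := cv_bounded _ _ (fb_x_minus_p_null c Hc).
  exists (M1 + (A + hnorm c)) => n.
  have := hnorm_le_sub (p n) (x n); have := hnorm_le_sub (x n) c; have := HA n; have := HM1 n.
  rewrite /dist_x (hnorm_sub_sym (p n)) => h1 h2 h3 h4.
  have := Rle_abs (hnorm (hsub (x n) (p n))); lra.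
Qed.

(* Hull points of the proximal points are zeros of df + B.  First, passing to
   the limit in cocoercive_shift with v = x_n, z = p_n, w = B c shows that a
   hull point q satisfies the cocoercivity inequality against every x0 ... *)
Lemma fb_hull_cocoercive c (P : nat -> Prop) q x0 dl :
  is_subgradient f c (hopp (B c)) -> hull_point p P q -> 0 < dl ->
  / chi * hnorm (hsub (B x0) (B c)) ^ 2 - dl <= hinner (hsub (B x0) (B c)) (hsub x0 q).
Proof.
  move=> Hc Hq Hdl; have [_ [A HA]] := fb_dist_cv c Hc; set g := hsub (B x0) (B c).
  suff : / chi * hnorm g ^ 2 - dl - hinner x0 g <= hinner q (hopp g).
  { by rewrite inner_oppr inner_subr (hinner_sym g x0) (hinner_sym g q); lra. }
  apply: (hull_point_halfspace _ _ _ _ _ Hq).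
  set C := hnorm (hsub x0 c) + A.
  have Herr : Un_cv (fun n => (2 / chi * hnorm g + C) * hnorm (dB c n)
                              + hnorm g * hnorm (hsub (x n) (p n))) 0.
  { apply: null_plus; apply: null_scal; [exact: fb_dB_null c Hc | exact: fb_x_minus_p_null c Hc]. }
  apply: ultimately_impl (null_ultimately _ Herr dl Hdl) => n h _.
  have := cocoercive_shift x0 (x n) (B c) (p n); rewrite -/g -/(dB c n).
  have Hxx : hnorm (hsub x0 (x n)) <= C.
  { have := hnorm_sub_triangle x0 c (x n); rewrite (hnorm_sub_sym c) /C; have := HA n.
    rewrite /dist_x; lra. }
  have := Rmult_le_compat_l _ _ _ (hnorm_ge0 (dB c n)) Hxx.
  have := Rle_abs ((2 / chi * hnorm g + C) * hnorm (dB c n) + hnorm g * hnorm (hsub (x n) (p n))).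
  rewrite inner_oppr inner_subr (hinner_sym g x0) (hinner_sym g (p n)) /Rdiv; nra.
Qed.

(* ... and taking x0 = q gives B q = B c, for every zero c. *)
Lemma fb_hull_B c (P : nat -> Prop) q :
  is_subgradient f c (hopp (B c)) -> hull_point p P q -> B q = B c.
Proof.
  move=> Hc Hq; apply: eq_of_sub_norm0; apply: Rle_antisym; last exact: hinner_pos.
  apply: Rle_plus_epsilon => d Hd; rewrite Rplus_0_l.
  have := fb_hull_cocoercive c P q q (d / chi) Hc Hq (Rdiv_lt_0_compat _ _ Hd chi_pos).
  rewrite (_ : hsub q q = hzero) ?inner0r ?hnorm_pow2; last by apply: vec_ext => z; inner_expand; ring.
  move=> h; have : / chi * hinner (hsub (B q) (B c)) (hsub (B q) (B c)) <= / chi * d.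
  { by rewrite /Rdiv in h; lra. }
  by move/Rmult_le_reg_l; apply; exact: Rinv_0_lt_compat.
Qed.

(* Second, passing to the limit in the subgradient inequality of ugrad_n at p_n
   puts every hull point in the sublevel sets of f + <., B c> ... *)
Lemma fb_hull_sublevel c (P : nat -> Prop) q r fr dl :
  is_subgradient f c (hopp (B c)) -> hull_point p P q -> f r = Fin fr -> 0 < dl ->
  affine_sublevel f (B c) (fr + hinner r (B c) + dl) q.
Proof.
  move=> Hc Hq Er Hdl; have [M HM] := fb_prox_bounded; set w := B c.
  apply: Hq; [exact: affine_sublevel_closed | exact: affine_sublevel_convex |].
  have Herr : Un_cv (fun n => (hnorm r + M) * hnorm (hadd (ugrad n) (B c))) 0
    by apply: null_scal; exact: fb_ugrad_null Hc.
  apply: ultimately_impl (null_ultimately _ Herr dl Hdl) => n h _.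
  have [fpn [Epn Hpn]] := ugrad_subgradient n; exists fpn; split => //.
  have := Hpn r; rewrite Er /=.
  have -> : hinner (hsub r (p n)) (ugrad n) =
            hinner (hsub r (p n)) (hadd (ugrad n) (B c)) - hinner r w + hinner (p n) w
    by rewrite /w; inner_expand; ring.
  have := cauchy_schwarz (hsub r (p n)) (hadd (ugrad n) (B c)).
  have : hnorm (hsub r (p n)) * hnorm (hadd (ugrad n) (B c)) <=
         (hnorm r + M) * hnorm (hadd (ugrad n) (B c)).
  { apply: Rmult_le_compat_r; first exact: hnorm_ge0.
    have := hnorm_sub_le r (p n); have := HM n; lra. }
  have := Rle_abs ((hnorm r + M) * hnorm (hadd (ugrad n) (B c))).
  have := Rle_abs (- hinner (hsub r (p n)) (hadd (ugrad n) (B c))); rewrite Rabs_Ropp; lra.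
Qed.

Lemma fb_hull_subgradient c (P : nat -> Prop) q :
  is_subgradient f c (hopp (B c)) -> hull_point p P q -> is_subgradient f q (hopp (B c)).
Proof.
  move=> Hc Hq; have [fc [Ec _]] := Hc.
  have [fq [Eq _]] := fb_hull_sublevel c P q c fc 1 Hc Hq Ec Rlt_0_1.
  exists fq; split => // y; case Ey: (f y) => [fy|] //=.
  have : fq + hinner q (B c) <= fy + hinner y (B c).
  { apply: Rle_plus_epsilon => d Hd; have [fq' [Eq' H']] := fb_hull_sublevel c P q y fy d Hc Hq Ey Hd.
    by rewrite Eq in Eq'; case: Eq' => Efq; subst fq'; lra. }
  by inner_expand; rewrite (hinner_sym y (B c)) (hinner_sym q (B c)); lra.
Qed.

Lemma fb_hull_zero (P : nat -> Prop) q :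
  hull_point p P q -> is_subgradient f q (hopp (B q)).
Proof.
  move=> Hq; have [c Hc] := zero_exists.
  by rewrite (fb_hull_B c P q Hc Hq); exact: fb_hull_subgradient Hc Hq.
Qed.

Lemma fb_hull_point_exists (P : nat -> Prop) :
  (forall N, exists n, (N <= n)%coq_nat /\ P n) -> exists q, hull_point p P q.
Proof. by have [M HM] := fb_prox_bounded; exact: hull_point_exists HM. Qed.

(* For two zeros q0, q1, the Fejer distances converge, hence so does <x_n, q0 - q1>. *)
Lemma fb_inner_diff_cv q0 q1 :
  is_subgradient f q0 (hopp (B q0)) -> is_subgradient f q1 (hopp (B q1)) ->
  exists beta, Un_cv (fun n => hinner (x n) (hsub q0 q1)) beta.
Proof.
  move=> H0 H1; have [[L0 HL0] _] := fb_dist_cv q0 H0; have [[L1 HL1] _] := fb_dist_cv q1 H1.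
  exists (/ 2 * (L1 * L1 - L0 * L0 + (hinner q0 q0 - hinner q1 q1))).
  apply: (Un_cv_ext (fun n => / 2 * (dist_x q1 n * dist_x q1 n - dist_x q0 n * dist_x q0 n
                                     + (hinner q0 q0 - hinner q1 q1)))).
  - move=> n; rewrite /dist_x !hnorm_mul; inner_expand.
    rewrite (hinner_sym q0 (x n)) (hinner_sym q1 (x n)); field.
  - apply: cv_scal; apply: CV_plus (cv_const _).
    by apply: CV_minus; apply: CV_mult.
Qed.

(* Opial-type uniqueness: all hull points of (p_n), along any index sets, coincide. *)
Lemma fb_hull_unique (P0 P1 : nat -> Prop) q0 q1 :
  hull_point p P0 q0 -> hull_point p P1 q1 -> q0 = q1.
Proof.
  move=> Hq0 Hq1; have [c Hc] := zero_exists.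
  have [beta Hx] := fb_inner_diff_cv q0 q1 (fb_hull_zero _ _ Hq0) (fb_hull_zero _ _ Hq1).
  set g := hsub q0 q1 in Hx *.
  have Hp : Un_cv (fun n => hinner (p n) g) beta.
  { have := CV_minus _ _ _ _ Hx (inner_null x p g (fb_x_minus_p_null c Hc)).
    rewrite Rminus_0_r; apply: Un_cv_ext => n; rewrite inner_subl; ring. }
  have E0 := hull_point_inner_limit _ _ _ _ _ Hq0 Hp.
  have E1 := hull_point_inner_limit _ _ _ _ _ Hq1 Hp.
  apply: eq_of_sub_norm0; rewrite -/g {1}/g inner_subl E0 E1; ring.
Qed.

(* If q0 is a hull point of the whole sequence (p_n), then <x_n, y> is
   ultimately below <q0, y> + dl: otherwise a hull point along the indices
   where it is not would be a different hull point. *)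
Lemma fb_inner_limsup q0 y dl :
  hull_point p (fun _ => True) q0 -> 0 < dl ->
  ultimately (fun n => hinner (x n) y < hinner q0 y + dl).
Proof.
  move=> Hq0 Hdl; apply: NNPP => Hn.
  pose P n := hinner q0 y + dl <= hinner (x n) y.
  have HP : forall N, exists n, (N <= n)%coq_nat /\ P n.
  { move=> N; apply: NNPP => Hn2; apply: Hn; exists N => n Hn'.
    by apply: Rnot_le_lt => h; apply: Hn2; exists n. }
  have [q1 Hq1] := fb_hull_point_exists P HP.
  have [c Hc] := zero_exists.
  have Hgap : hinner q0 y + dl / 2 <= hinner q1 y.
  { apply: (hull_point_halfspace _ _ _ _ _ Hq1).
    apply: ultimately_impl (null_ultimately _ (inner_null x p y (fb_x_minus_p_null c Hc))
                              (dl / 2) ltac:(lra)) => n h Pn.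
    rewrite inner_subl in h; move: h Pn => /Rabs_def2; rewrite /P; lra. }
  by move: Hgap; rewrite -(fb_hull_unique _ _ _ _ Hq0 Hq1); lra.
Qed.

Lemma fb_weak_cv : exists xbar, is_subgradient f xbar (hopp (B xbar)) /\
  weak_cv x xbar /\ strong_cv (fun n => B (x n)) (B xbar).
Proof.
  have [q0 Hq0] := fb_hull_point_exists (fun _ => True) (fun N => ex_intro _ N (conj (le_n N) I)).
  have Hz0 := fb_hull_zero _ _ Hq0.
  exists q0; split => //; split; last exact: fb_dB_null q0 Hz0.
  move=> y; apply/Un_cv_ultimately => e He.
  apply: ultimately_impl (ultimately_and _ _ (fb_inner_limsup q0 y (e / 2) Hq0 ltac:(lra))
                                            (fb_inner_limsup q0 (hopp y) (e / 2) Hq0 ltac:(lra))).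
  by move=> n []; rewrite !inner_oppr => h1 h2; apply: Rabs_def1; lra.
Qed.

End ForwardBackward.

Section ListSums.
Variable T : eqType.
Implicit Types (l : seq T) (F G : T -> R).

Definition sumL l F : R := foldr Rplus 0 (map F l).

Lemma sumL_nil F : sumL [::] F = 0.
Proof. by []. Qed.

Lemma sumL_cons j l F : sumL (j :: l) F = F j + sumL l F.
Proof. by []. Qed.

Lemma sumL_add l F G : sumL l (fun j => F j + G j) = sumL l F + sumL l G.
Proof. by elim: l => [|j l IH]; rewrite ?sumL_nil ?sumL_cons ?IH; ring. Qed.

Lemma sumL_scal l c F : sumL l (fun j => c * F j) = c * sumL l F.
Proof. by elim: l => [|j l IH]; rewrite ?sumL_nil ?sumL_cons ?IH; ring. Qed.

Lemma sumL_ext l F G : (forall j, F j = G j) -> sumL l F = sumL l G.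
Proof. by move=> H; rewrite /sumL (eq_map H). Qed.

Lemma sumL_nonneg l F : (forall j, 0 <= F j) -> 0 <= sumL l F.
Proof. by move=> H; elim: l => [|j l IH]; rewrite ?sumL_nil ?sumL_cons; [lra | have := H j; lra]. Qed.

Lemma sumL_term l F i : (forall j, 0 <= F j) -> i \in l -> F i <= sumL l F.
Proof.
  move=> H; elim: l => [|j l IH] //; rewrite in_cons sumL_cons => /orP [/eqP ->|Hi].
  - by have := sumL_nonneg l F H; lra.
  - by have := IH Hi; have := H j; lra.
Qed.

Lemma sumL_single l F i :
  (forall j, j <> i -> F j = 0) -> uniq l -> i \in l -> sumL l F = F i.
Proof.
  move=> H; elim: l => [|j l IH] //= /andP [Hj Hu]; rewrite in_cons sumL_cons.
  case/orP => [/eqP Eij|Hi].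
  - subst j; rewrite (_ : sumL l F = 0); first ring.
    elim: l Hj {IH Hu} => [|k l IH2] //=; rewrite in_cons negb_or => /andP [Hk Hl].
    rewrite sumL_cons IH2 // H; first ring.
    by move=> E; move: Hk; rewrite E eqxx.
  - rewrite IH // H; first ring.
    by move=> E; move: Hj; rewrite E Hi.
Qed.

Lemma sumL_sq_le l F : (forall j, 0 <= F j) -> sumL l (fun j => F j * F j) <= sumL l F * sumL l F.
Proof.
  move=> H; elim: l => [|j l IH]; rewrite ?sumL_nil ?sumL_cons; first lra.
  have := H j; have := sumL_nonneg l F H; nra.
Qed.

Lemma sumL_bound l F c : (forall j, F j <= c) -> sumL l F <= INR (size l) * c.
Proof.
  move=> H; elim: l => [|j l IH]; rewrite ?sumL_nil ?sumL_cons; first by rewrite /=; lra.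
  have -> : INR (size (j :: l)) = INR (size l) + 1 by exact: S_INR.
  by have := H j; lra.
Qed.

Lemma sumL_cv l (F : T -> nat -> R) (L : T -> R) :
  (forall j, Un_cv (F j) (L j)) -> Un_cv (fun n => sumL l (fun j => F j n)) (sumL l L).
Proof.
  move=> H; elim: l => [|j l IH]; first exact: cv_const.
  exact: CV_plus.
Qed.

Lemma sumL_swap l (F : nat -> T -> R) N :
  sum_f_R0 (fun n => sumL l (F n)) N = sumL l (fun j => sum_f_R0 (fun n => F n j) N).
Proof. by elim: N => [|N IH] //=; rewrite IH -sumL_add. Qed.

Lemma ultimately_all_in l (Q : T -> nat -> Prop) :
  (forall j, ultimately (Q j)) -> ultimately (fun n => forall j, j \in l -> Q j n).
Proof.
  move=> H; elim: l => [|j l IH]; first by exists O.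
  apply: ultimately_impl (ultimately_and _ _ (H j) IH) => n [h1 h2] k.
  by rewrite in_cons => /orP [/eqP ->|Hk] //; exact: h2.
Qed.

End ListSums.

Section ProductSpace.
Variables (m : nat) (H : 'I_m -> Hilbert).

Definition pzero : Prod H := fun i => hzero.
Definition popp (x : Prod H) : Prod H := fun i => hopp (x i).

Lemma sumI_sumL (F : 'I_m -> R) : sumI F = sumL _ (enum 'I_m) F.
Proof. by []. Qed.

Lemma in_enum_ord (i : 'I_m) : i \in enum 'I_m.
Proof. by rewrite mem_enum. Qed.

Lemma padd_assoc (x y z : Prod H) : padd x (padd y z) = padd (padd x y) z.
Proof. by apply: functional_extensionality_dep => i; exact: hadd_assoc. Qed.
Lemma padd_comm (x y : Prod H) : padd x y = padd y x.
Proof. by apply: functional_extensionality_dep => i; exact: hadd_comm. Qed.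
Lemma padd_zero (x : Prod H) : padd x pzero = x.
Proof. by apply: functional_extensionality_dep => i; exact: hadd_zero. Qed.
Lemma padd_opp (x : Prod H) : padd x (popp x) = pzero.
Proof. by apply: functional_extensionality_dep => i; exact: hadd_opp. Qed.
Lemma pscal_one (x : Prod H) : pscal 1 x = x.
Proof. by apply: functional_extensionality_dep => i; exact: hscal_one. Qed.
Lemma pscal_assoc a b (x : Prod H) : pscal a (pscal b x) = pscal (a * b) x.
Proof. by apply: functional_extensionality_dep => i; exact: hscal_assoc. Qed.
Lemma pscal_distr_l a (x y : Prod H) : pscal a (padd x y) = padd (pscal a x) (pscal a y).
Proof. by apply: functional_extensionality_dep => i; exact: hscal_distr_l. Qed.
Lemma pscal_distr_r a b (x : Prod H) : pscal (a + b) x = padd (pscal a x) (pscal b x).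
Proof. by apply: functional_extensionality_dep => i; exact: hscal_distr_r. Qed.
Lemma pinner_sym (x y : Prod H) : pinner x y = pinner y x.
Proof. by apply: sumL_ext => i; exact: hinner_sym. Qed.
Lemma pinner_add (x y z : Prod H) : pinner (padd x y) z = pinner x z + pinner y z.
Proof. by rewrite /pinner !sumI_sumL -sumL_add; apply: sumL_ext => i; exact: hinner_add. Qed.
Lemma pinner_scal a (x y : Prod H) : pinner (pscal a x) y = a * pinner x y.
Proof. by rewrite /pinner !sumI_sumL -sumL_scal; apply: sumL_ext => i; exact: hinner_scal. Qed.
Lemma pinner_pos (x : Prod H) : 0 <= pinner x x.
Proof. by apply: sumL_nonneg => i; exact: hinner_pos. Qed.

Lemma pinner_component_le (x : Prod H) i : hinner (x i) (x i) <= pinner x x.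
Proof.
  apply: (sumL_term _ _ (fun j => hinner (x j) (x j))); [exact: (fun j => hinner_pos _) | exact: in_enum_ord].
Qed.

Lemma pinner_def (x : Prod H) : pinner x x = 0 -> x = pzero.
Proof.
  move=> E; apply: functional_extensionality_dep => i; apply: hinner_def.
  have := pinner_component_le x i; have := hinner_pos (x i); lra.
Qed.

Lemma prod_cv_of_components (u : nat -> Prod H) (l : Prod H) :
  (forall i eps, 0 < eps -> exists N, forall n, le N n ->
       sqrt (hinner (hadd (u n i) (hopp (l i))) (hadd (u n i) (hopp (l i)))) < eps) ->
  forall eps, 0 < eps -> exists N, forall n, le N n ->
       sqrt (pinner (padd (u n) (popp l)) (padd (u n) (popp l))) < eps.
Proof.
  move=> Hl eps He.
  have Hm := pos_INR m; set e' := eps / (INR m + 1).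
  have He' : 0 < e' by apply: Rdiv_lt_0_compat; lra.
  have [N HN] := ultimately_all_in _ (enum 'I_m) _ (fun i => Hl i e' He').
  exists N => n Hn; set v := padd (u n) (popp l).
  have Hs : pinner v v <= INR m * (e' * e').
  { have <- : INR (size (enum 'I_m)) = INR m by rewrite size_enum_ord.
    rewrite /pinner sumI_sumL; apply: sumL_bound => i.
    have := HN n Hn i (in_enum_ord i); rewrite /v /padd /popp.
    set w := hadd (u n i) (hopp (l i)) => h.
    have := sqrt_pos (hinner w w); have := sqrt_sqrt (hinner w w) (hinner_pos w); nra. }
  have He2 : INR m * (e' * e') < eps * eps.
  { have -> : INR m * (e' * e') = eps * eps * (INR m / ((INR m + 1) * (INR m + 1)))
      by rewrite /e'; field; lra.
    have : INR m / ((INR m + 1) * (INR m + 1)) < 1.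
    { apply: (Rmult_lt_reg_r ((INR m + 1) * (INR m + 1))); first nra.
      have -> : INR m / ((INR m + 1) * (INR m + 1)) * ((INR m + 1) * (INR m + 1)) = INR m
        by field; lra.
      nra. }
    by move=> h; have := Rmult_lt_compat_l (eps * eps) _ _ ltac:(nra) h; lra. }
  apply: lt_of_sq_lt; [exact: sqrt_pos | lra |].
  by rewrite sqrt_sqrt; [lra | exact: pinner_pos].
Qed.

Lemma prod_complete (u : nat -> Prod H) :
    (forall eps, 0 < eps -> exists N, forall p q, le N p -> le N q ->
        sqrt (pinner (padd (u p) (popp (u q))) (padd (u p) (popp (u q)))) < eps) ->
    exists l, forall eps, 0 < eps -> exists N, forall n, le N n ->
        sqrt (pinner (padd (u n) (popp l)) (padd (u n) (popp l))) < eps.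
Proof.
  move=> Hc.
  have Hcomp : forall i, exists li : H i, forall eps, 0 < eps -> exists N, forall n, le N n ->
        sqrt (hinner (hadd (u n i) (hopp li)) (hadd (u n i) (hopp li))) < eps.
  { move=> i; apply: (hcomplete (fun n => u n i)) => eps /Hc [N HN].
    exists N => p q Hp Hq; apply: Rle_lt_trans (HN p q Hp Hq); apply: sqrt_le_1_alt.
    exact: (pinner_component_le (padd (u p) (popp (u q))) i). }
  have [l Hl] := dep_choice _ Hcomp.
  by exists l; apply: prod_cv_of_components.
Qed.

Definition PH : Hilbert := mkHilbert (Prod H) pzero padd popp pscal pinner
  padd_assoc padd_comm padd_zero padd_opp pscal_one pscal_assoc pscal_distr_l pscal_distr_r
  pinner_sym pinner_add pinner_scal pinner_pos pinner_def prod_complete.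

End ProductSpace.

Section Components.
Variables (m : nat) (H : 'I_m -> Hilbert).

Lemma upd_same (x : Prod H) i v : upd x i v i = v.
Proof. by rewrite /upd; case: eqP => [e|//]; rewrite (eq_irrelevance e (erefl i)). Qed.

Lemma upd_other (x : Prod H) i v j : i <> j -> upd x i v j = x j.
Proof. by rewrite /upd; case: eqP. Qed.

Lemma upd_id (x : Prod H) i : upd x i (x i) = x.
Proof. by apply: functional_extensionality_dep => j; rewrite /upd; case: eqP => // e; case: j / e. Qed.

Lemma pinner_single (u w : Prod H) i :
  (forall j, j <> i -> hinner (u j) (w j) = 0) -> pinner u w = hinner (u i) (w i).
Proof.
  move=> H0; rewrite /pinner sumI_sumL.
  rewrite (sumL_single _ _ (fun j => hinner (u j) (w j)) i) //; [exact: enum_uniq | exact: in_enum_ord].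
Qed.

Lemma pinner_upd (x : Prod H) i v (u : Prod H) :
  pinner (psub (upd x i v) x) u = hinner (hsub v (x i)) (u i).
Proof.
  rewrite (pinner_single _ _ i); first by rewrite /psub upd_same.
  by move=> j Hj; rewrite /psub upd_other; [inner_expand; ring | move=> E; apply: Hj].
Qed.

Lemma pinner_emb (x : Prod H) i (y : H i) : pinner x (upd (pzero m H) i y) = hinner (x i) y.
Proof.
  rewrite (pinner_single _ _ i); first by rewrite upd_same.
  by move=> j Hj; rewrite upd_other; [exact: inner0r | move=> E; apply: Hj].
Qed.

Lemma component_hnorm_le (v : Prod H) i : hnorm (v i) <= @hnorm (PH m H) v.
Proof. exact/sqrt_le_1_alt/pinner_component_le. Qed.

Lemma prod_hnorm_le_sum (v : Prod H) : @hnorm (PH m H) v <= sumI (fun i => hnorm (v i)).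
Proof.
  rewrite sumI_sumL; apply: le_of_sq_le; [exact: hnorm_ge0 | by apply: sumL_nonneg => i; exact: hnorm_ge0 |].
  apply: Rle_trans (sumL_sq_le _ _ _ (fun i => hnorm_ge0 _)).
  by rewrite hnorm_mul; apply/Req_le/sumL_ext => i; rewrite hnorm_mul.
Qed.

Lemma prod_abs_summable (c : nat -> Prod H) :
  (forall i, abs_summable (fun n => c n i)) -> @abs_summable (PH m H) c.
Proof.
  move=> Hc; have [Si HSi] := choice _ Hc.
  have Hs : Un_cv (sum_f_R0 (fun n => sumI (fun i => hnorm (c n i)))) (sumI Si).
  { apply: (Un_cv_ext (fun N => sumL _ (enum 'I_m) (fun i => sum_f_R0 (fun n => hnorm (c n i)) N))).
    - by move=> N; rewrite (sumL_swap _ _ (fun n i => hnorm (c n i))).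
    - exact: sumL_cv. }
  have [l Hl] := Rseries_CV_comp (fun n => @hnorm (PH m H) (c n)) _
    (fun n => conj (hnorm_ge0 _) (prod_hnorm_le_sum (c n))) (exist _ _ Hs).
  by exists l.
Qed.

Lemma weak_cv_component (x : nat -> Prod H) (xb : Prod H) i :
  @weak_cv (PH m H) x xb -> weak_cv (fun n => x n i) (xb i).
Proof.
  move=> Hw y; rewrite -(pinner_emb xb i y).
  by apply: (Un_cv_ext _ _ _ _ (Hw (upd (pzero m H) i y))) => n; exact: pinner_emb.
Qed.

Lemma strong_cv_component (u : nat -> Prod H) (l : Prod H) i :
  @strong_cv (PH m H) u l -> strong_cv (fun n => u n i) (l i).
Proof.
  apply: null_squeeze => n; rewrite Rabs_right; last exact/Rle_ge/hnorm_ge0.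
  exact: (component_hnorm_le (@hsub (PH m H) (u n) l)).
Qed.

Definition joint_op (G : forall i : 'I_m, Prod H -> H i) (y : PH m H) : PH m H :=
  fun i => G i y.

Lemma joint_op_cocoercive (G : forall i : 'I_m, Prod H -> H i) chi :
  (forall x y : Prod H,
      sumI (fun i => hinner (hsub (G i x) (G i y)) (hsub (x i) (y i)))
      >= / chi * sumI (fun i => hnorm (hsub (G i x) (G i y)) ^ 2)) ->
  forall u v : PH m H, hinner (hsub (joint_op G u) (joint_op G v)) (hsub u v) >=
                     / chi * hnorm (hsub (joint_op G u) (joint_op G v)) ^ 2.
Proof.
  move=> Hcoco u v; rewrite hnorm_pow2.
  have E : sumI (fun i => hnorm (hsub (G i u) (G i v)) ^ 2) =
           sumI (fun i => hinner (hsub (G i u) (G i v)) (hsub (G i u) (G i v)))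
    by apply: sumL_ext => i; exact: hnorm_pow2.
  by have := Hcoco u v; rewrite E.
Qed.

(* A zero of df + joint_op G solves Problem (P): on each coordinate, -G_i is a
   subgradient of f and G_i (the gradient of the convex partial function of
   g_i) is a subgradient of g_i, so the partial sum is minimized. *)
Lemma solves_P_of_zero (f : Prod H -> eR) (g : 'I_m -> Prod H -> eR)
    (G : forall i : 'I_m, Prod H -> H i) (xb : Prod H) :
  (forall i (x : Prod H), convex_fun (@hadd (H i)) (@hscal (H i)) (fun v => g i (upd x i v))) ->
  (forall i (x : Prod H), has_gradient (fun v => g i (upd x i v)) (x i) (G i x)) ->
  @is_subgradient (PH m H) f xb (hopp (joint_op G xb)) -> solves_P f g xb.
Proof.
  move=> Hconv Hgrad [fx [Efx Hfx]] i v; rewrite upd_id.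
  have [gx [Egx Hgx]] := gradient_subgradient _ _ _ (Hconv i xb) (Hgrad i xb).
  rewrite /= upd_id in Egx; rewrite Efx Egx.
  have h1 := Hfx (upd xb i v); have h2 := Hgx v.
  have E : @hinner (PH m H) (@hsub (PH m H) (upd xb i v) xb) (joint_op G xb) =
           hinner (hsub v (xb i)) (G i xb) := pinner_upd xb i v (joint_op G xb).
  rewrite inner_oppr E in h1.
  by case: (f (upd xb i v)) h1 => [fv|] //=; case: (g i (upd xb i v)) h2 => [gv|] //= *; lra.
Qed.

End Components.

Theorem theorem3p4
  (m : nat) (Hm : le 2 m) (H : 'I_m -> Hilbert)
  (f : Prod H -> eR) (g : 'I_m -> Prod H -> eR)
  (G : forall i : 'I_m, Prod H -> hcar (H i))
  (Hf : Gamma0_prod f)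
  (Hg_conv : forall i (x : Prod H), convex_fun (@hadd (H i)) (@hscal (H i))
                                      (fun v => g i (upd x i v)))
  (Hg_grad : forall i (x : Prod H), has_gradient (fun v => g i (upd x i v)) (x i) (G i x))
  (Hmono : forall x y : Prod H,
      0 <= sumI (fun i => hinner (hsub (G i x) (G i y)) (hsub (x i) (y i))))
  (Hz : exists z : Prod H, subdiff_prod f z (fun i => hopp (G i z)))
  (chi : R) (Hchi : 0 < chi)
  (Hcoco : forall x y : Prod H,
      sumI (fun i => hinner (hsub (G i x) (G i y)) (hsub (x i) (y i)))
      >= / chi * sumI (fun i => hnorm (hsub (G i x) (G i y)) ^ 2))
  (eps : R) (Heps : 0 < eps < 2 / (chi + 1))
  (gam : nat -> R) (Hgam : forall n, eps <= gam n <= (2 - eps) / chi)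
  (x : nat -> Prod H) (a b : nat -> Prod H)
  (Ha : forall i, abs_summable (fun n => a n i))
  (Hb : forall i, abs_summable (fun n => b n i))
  (Hiter : forall n,
      let y : Prod H := fun i => hsub (x n i) (hscal (gam n) (hadd (G i (x n)) (a n i))) in
      exists p : Prod H, is_prox_prod (gam n) f y p /\ x (S n) = padd p (b n)) :
  exists xbar : Prod H,
    solves_P f g xbar /\
    forall i, weak_cv (fun n => x n i) (xbar i) /\
              strong_cv (fun n => G i (x n)) (G i xbar).
Proof.
  have [Hproper [Hlsc Hconvex]] := Hf.
  (* the iteration is the forward-backward method in the product space *)
  have [p Hp] := choice _ Hiter.
  have [xb [Hzero [Hweak Hstrong]]] :=
    @fb_weak_cv (PH m H) f (joint_op m H G) chi eps gam x a b p Hproper Hlsc Hconvex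
      (joint_op_cocoercive m H G chi Hcoco) Hchi Heps Hgam
      (prod_abs_summable m H a Ha) (prod_abs_summable m H b Hb)
      (fun n => proj1 (Hp n)) (fun n => proj2 (Hp n)) Hz.
  exists xb; split; first exact: solves_P_of_zero Hg_conv Hg_grad Hzero.
  move=> i; split; first exact: weak_cv_component.
  exact: (strong_cv_component m H _ _ i Hstrong).
Qed.
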